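(* Consider $n>1$ fat robots operating in the plane under the model described in the context: semi-synchronous scheduling, rigid motion, and agreement only on the direction of the $Y$ axis. Then there is a distributed algorithm executed identically by all robots such that, from any initial configuration, the robots form a uniform circle in finite time, i.e. after finitely many Look-Compute-Move cycles the centers of the robots are placed equidistantly on a common circle, so that they are the vertices of a convex regular $n$-gon. Moreover, no collision occurs at any time during the execution.
   Context: Model (fat robots). Each robot is a closed disc of radius $1$ in the plane (this common radius serves as the unit of length for all robots) and is identified with its center. In the initial configuration the robot discs do not overlap. The robots are transparent: a robot never blocks another robot's view, so every robot sees all other robots. They nevertheless act as physical obstacles. A collision occurs if, at some moment, the discs of two robots overlap. Robots are anonymous (indistinguishable), autonomous, and oblivious: they keep no memory of past observations or computations. They do not communicate by message passing. Each robot uses its own local coordinate system. All robots agree on the direction of the $Y$ axis (north/south), but not on the orientation of the $X$ axis, i.e. there is no common chirality. Each robot repeatedly executes a cycle of three phases: - Look: the robot takes a snapshot of the positions of all robots in its local coordinates. - Compute: it computes a destination point from this snapshot. - Move: it moves to that destination. Semi-synchronous scheduling means that in each round an arbitrary nonempty subset of robots performs a full Look-Compute-Move cycle simultaneously and atomically, so no robot observes another robot while that robot is moving. Rigid motion means a moving robot always reaches its computed destination without being stopped. The number of robots $n$ and a length $a>3$ are given to the robots as inputs. The side length of the polygon to be formed is required to be at least $a$. *)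

From Stdlib Require Import Reals.
Open Scope R_scope.

Definition pt : Type := (R * R)%type.

Definition dist (p q : pt) : R :=
  sqrt ((fst p - fst q) ^ 2 + (snd p - snd q) ^ 2).

(** A local coordinate system of a robot: an arbitrary origin, the common
    unit of length (the robot radius), the common direction of the Y axis,
    and an X axis whose orientation may be flipped (no common chirality). *)
Record frame : Type := mkFrame { origin : pt ; flipx : bool }.

Definition xsign (f : frame) : R := if flipx f then -1 else 1.

Definition to_local (f : frame) (q : pt) : pt :=
  (xsign f * (fst q - fst (origin f)), snd q - snd (origin f)).

Definition to_global (f : frame) (q : pt) : pt :=
  (fst (origin f) + xsign f * fst q, snd (origin f) + snd q).

Definition config : Type := nat -> pt.

(** An (oblivious, anonymous) algorithm: from the robot's own position and the
    set of positions of all robots, both in its local coordinates, it computes a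
    destination in local coordinates. *)
Definition algorithm : Type := pt -> (pt -> Prop) -> pt.

Definition snapshot (n : nat) (f : frame) (P : config) : pt -> Prop :=
  fun q => exists j, (j < n)%nat /\ q = to_local f (P j).

(** One semi-synchronous round: activated robots perform Look-Compute-Move
    atomically on the same snapshot; rigid motion (destination reached). *)
Definition step (n : nat) (A : algorithm) (F : nat -> frame)
    (act : nat -> bool) (P : config) : config :=
  fun i => if act i
           then to_global (F i) (A (to_local (F i) (P i)) (snapshot n (F i) P))
           else P i.

Fixpoint exec (n : nat) (A : algorithm) (F : nat -> frame)
    (act : nat -> nat -> bool) (P0 : config) (k : nat) : config :=
  match k with
  | O => P0
  | S k' => step n A F (act k') (exec n A F act P0 k')
  end.

(** SSYNC scheduler: every round activates a nonempty subset of robots, and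
    (fairness) every robot is activated infinitely often. *)
Definition valid_schedule (n : nat) (act : nat -> nat -> bool) : Prop :=
  (forall k, exists i, (i < n)%nat /\ act k i = true) /\
  (forall i, (i < n)%nat -> forall k, exists k', (k <= k')%nat /\ act k' i = true).

(** Discs of radius 1 centered at p and q overlap iff dist p q < 2. *)
Definition no_overlap (n : nat) (P : config) : Prop :=
  forall i j, (i < n)%nat -> (j < n)%nat -> i <> j -> 2 <= dist (P i) (P j).

(** Position at time t in [0,1] of a robot moving along the straight segment
    from p to d during a round (all active robots move simultaneously). *)
Definition interp (p d : pt) (t : R) : pt :=
  (fst p + t * (fst d - fst p), snd p + t * (snd d - snd p)).

Definition collision_free_move (n : nat) (P Q : config) : Prop :=
  forall t, 0 <= t <= 1 ->
    no_overlap n (fun i => interp (P i) (Q i) t).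

Definition vertex (c : pt) (r th : R) (n k : nat) : pt :=
  (fst c + r * cos (th + 2 * PI * INR k / INR n),
   snd c + r * sin (th + 2 * PI * INR k / INR n)).

Definition uniform_circle (n : nat) (a : R) (P : config) : Prop :=
  exists (c : pt) (r th : R) (s : nat -> nat),
    0 < r /\
    (forall i, (i < n)%nat -> (s i < n)%nat) /\
    (forall i j, (i < n)%nat -> (j < n)%nat -> s i = s j -> i = j) /\
    (forall i, (i < n)%nat -> P i = vertex c r th n (s i)) /\
    a <= dist (vertex c r th n 0) (vertex c r th n 1).

(* The robots agree on the Y axis, so their views of a configuration differ by maps
   (x, y) |-> (+-x + u, y + v). The algorithm ranks configurations: every robot computes the
   same canonical representative of the orbit of what it sees, hence the same minimal rank and
   the same planned move M -> D of a single robot. A robot moves when a symmetry of the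
   configuration carries M to it; since the only such map other than the identity that can fix
   a finite set is a reflection in a vertical axis, either M moves alone or M and its mirror
   image move together. Each round is collision free and either changes nothing or lowers the
   rank, and by fairness M is eventually activated, so the rank reaches 0.

   The topmost robots are first brought into one of two shapes, a single robot or a wide pair,
   and lifted high above the others. They become the top vertex, or the top side, of a regular
   n-gon of side at least a + 3, whose vertices are the slots. The remaining robots, the crowd,
   lie far below and move one by one (up to the symmetry) to the highest free slot along steep
   segments, which stay clear of the occupied slots. Rank 0 means that every robot occupies a
   slot. *)

From Pilot Require Import Defs.
From Stdlib Require Import Reals Lra Lia ZArith Classical List ClassicalEpsilon
  FunctionalExtensionality PropExtensionality.
Open Scope R_scope.

(* [Reals] exports another [dist], on metric spaces. *)
Notation dist := Defs.dist.

(** * Isometries preserving the Y axis *)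

Record iso := mkIso { flip : bool; shift_x : R; shift_y : R }.

Definition flip_sign (b : bool) : R := if b then -1 else 1.

Definition iso_app (g : iso) (q : pt) : pt :=
  (flip_sign (flip g) * fst q + shift_x g, snd q + shift_y g).

Definition iso_comp (g h : iso) : iso :=
  mkIso (xorb (flip g) (flip h)) (flip_sign (flip g) * shift_x h + shift_x g)
    (shift_y h + shift_y g).

Definition iso_inv (g : iso) : iso :=
  mkIso (flip g) (- (flip_sign (flip g) * shift_x g)) (- shift_y g).

Definition iso_id : iso := mkIso false 0 0.

Lemma pt_eq (p q : pt) : fst p = fst q -> snd p = snd q -> p = q.
Proof. destruct p, q; simpl; intros; subst; auto. Qed.

Lemma iso_app_comp g h q : iso_app (iso_comp g h) q = iso_app g (iso_app h q).
Proof.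
  destruct g as [[] ? ?], h as [[] ? ?], q; unfold iso_app, iso_comp; simpl;
    apply pt_eq; simpl; ring.
Qed.

Lemma iso_app_invK g q : iso_app (iso_inv g) (iso_app g q) = q.
Proof. destruct g as [[] ? ?], q; unfold iso_app, iso_inv; simpl; apply pt_eq; simpl; ring. Qed.

Lemma iso_app_Kinv g q : iso_app g (iso_app (iso_inv g) q) = q.
Proof. destruct g as [[] ? ?], q; unfold iso_app, iso_inv; simpl; apply pt_eq; simpl; ring. Qed.

Lemma iso_inv_invE g q : iso_app (iso_inv (iso_inv g)) q = iso_app g q.
Proof. destruct g as [[] ? ?], q; unfold iso_app, iso_inv; simpl; apply pt_eq; simpl; ring. Qed.

Lemma iso_app_id q : iso_app iso_id q = q.
Proof. destruct q; unfold iso_app; simpl; apply pt_eq; simpl; ring. Qed.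

Lemma iso_app_inj g p q : iso_app g p = iso_app g q -> p = q.
Proof. intro H. rewrite <- (iso_app_invK g p), <- (iso_app_invK g q), H. auto. Qed.

Lemma iso_app_inv_comp g h q :
  iso_app (iso_inv (iso_comp g h)) q = iso_app (iso_inv h) (iso_app (iso_inv g) q).
Proof.
  apply (iso_app_inj (iso_comp g h)). rewrite iso_app_Kinv, iso_app_comp, !iso_app_Kinv. auto.
Qed.

Lemma dist_iso_app g p q : dist (iso_app g p) (iso_app g q) = dist p q.
Proof. unfold Defs.dist, iso_app; simpl. f_equal. destruct (flip g); simpl; ring. Qed.

Lemma interp_iso_app g p q t : interp (iso_app g p) (iso_app g q) t = iso_app g (interp p q t).
Proof. unfold interp, iso_app; simpl; apply pt_eq; simpl; ring. Qed.

Definition iso_img (g : iso) (S : pt -> Prop) : pt -> Prop := fun q => S (iso_app (iso_inv g) q).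

Lemma set_ext (S T : pt -> Prop) : (forall q, S q <-> T q) -> S = T.
Proof.
  intro H; apply functional_extensionality; intro q; apply propositional_extensionality; auto.
Qed.

Lemma iso_img_comp g h S : iso_img g (iso_img h S) = iso_img (iso_comp g h) S.
Proof. apply set_ext; intro q; unfold iso_img. rewrite iso_app_inv_comp. tauto. Qed.

Lemma iso_img_id S : iso_img iso_id S = S.
Proof.
  apply set_ext; intro q; unfold iso_img.
  replace (iso_app (iso_inv iso_id) q) with q; [tauto|].
  destruct q; unfold iso_app, iso_inv, iso_id; simpl; apply pt_eq; simpl; ring.
Qed.

Lemma iso_img_invK g S : iso_img (iso_inv g) (iso_img g S) = S.
Proof. apply set_ext; intro q; unfold iso_img. rewrite iso_inv_invE, iso_app_invK. tauto. Qed.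

Lemma iso_img_fixed_mem h S q : iso_img h S = S -> S q -> S (iso_app h q).
Proof. intros E Hq. rewrite <- E. unfold iso_img. rewrite iso_app_invK. auto. Qed.

Lemma iso_img_fixed_mem_inv h S q : iso_img h S = S -> S q -> S (iso_app (iso_inv h) q).
Proof. intros E Hq. rewrite <- E in Hq. exact Hq. Qed.

(** * Configurations as point sets *)

Definition positions (n : nat) (P : config) : pt -> Prop :=
  fun q => exists j, (j < n)%nat /\ q = P j.

Definition map_config (g : iso) (P : config) : config := fun i => iso_app g (P i).

Lemma iso_img_positions n g P : iso_img g (positions n P) = positions n (map_config g P).
Proof.
  apply set_ext; intro q; unfold iso_img, positions, map_config; split.
  - intros [j [Hj E]]. exists j; split; auto. rewrite <- E, iso_app_Kinv; auto.
  - intros [j [Hj E]]. exists j; split; auto. rewrite E, iso_app_invK; auto.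
Qed.

Lemma positions_ext n P P' : (forall i, (i < n)%nat -> P' i = P i) ->
  positions n P' = positions n P.
Proof.
  intro H; apply set_ext; intro q; unfold positions;
    split; intros [j [Hj E]]; exists j; split; auto; rewrite E; [|symmetry]; apply H; auto.
Qed.

Definition frame_iso (f : frame) : iso :=
  mkIso (flipx f) (- (xsign f * fst (origin f))) (- snd (origin f)).

Lemma to_local_iso f q : to_local f q = iso_app (frame_iso f) q.
Proof.
  unfold to_local, iso_app, frame_iso, xsign, flip_sign; destruct (flipx f); simpl;
    apply pt_eq; simpl; ring.
Qed.

Lemma to_global_iso f q : to_global f q = iso_app (iso_inv (frame_iso f)) q.
Proof.
  unfold to_global, iso_app, frame_iso, iso_inv, xsign, flip_sign; destruct (flipx f); simpl;
    apply pt_eq; simpl; ring.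
Qed.

Lemma snapshot_iso_img n f P : snapshot n f P = iso_img (frame_iso f) (positions n P).
Proof.
  rewrite iso_img_positions. apply set_ext; intro q; unfold snapshot, positions, map_config.
  split; intros [j [Hj E]]; exists j; split; auto; rewrite E, to_local_iso; auto.
Qed.

Lemma no_overlap_map_config n g P : no_overlap n (map_config g P) <-> no_overlap n P.
Proof.
  unfold no_overlap, map_config; split; intros H i j Hi Hj Hij;
    specialize (H i j Hi Hj Hij); rewrite ?dist_iso_app in *; auto.
Qed.

Lemma collision_free_move_map_config n g P Q :
  collision_free_move n (map_config g P) (map_config g Q) -> collision_free_move n P Q.
Proof.
  intros H t Ht i j Hi Hj Hij. specialize (H t Ht i j Hi Hj Hij).
  unfold map_config in H; rewrite !interp_iso_app, dist_iso_app in H; auto.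
Qed.

Lemma interp_1 p q : interp p q 1 = q.
Proof. destruct p, q; unfold interp; simpl; apply pt_eq; simpl; ring. Qed.

Lemma collision_free_move_end n P P' : collision_free_move n P P' -> no_overlap n P'.
Proof.
  intros H i j Hi Hj Hij. specialize (H 1 ltac:(lra) i j Hi Hj Hij). simpl in H.
  rewrite !interp_1 in H; auto.
Qed.

(** * Symmetries of a configuration *)

Definition mirror (c : R) (q : pt) : pt := (2 * c - fst q, snd q).

Definition mirror_symmetric (S : pt -> Prop) (c : R) : Prop := forall q, S q -> S (mirror c q).

Lemma mirror_involutive c q : mirror c (mirror c q) = q.
Proof. unfold mirror; destruct q; simpl; apply pt_eq; simpl; ring. Qed.

Definition mirror_iso (c : R) : iso := mkIso true (2 * c) 0.

Lemma iso_app_mirror c q : iso_app (mirror_iso c) q = mirror c q.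
Proof. unfold iso_app, mirror_iso, mirror; simpl. apply pt_eq; simpl; ring. Qed.

Lemma iso_inv_mirror c : iso_inv (mirror_iso c) = mirror_iso c.
Proof. unfold iso_inv, mirror_iso; simpl. f_equal; ring. Qed.

Lemma ex_argmax (f : pt -> R) n (P : config) : (0 < n)%nat ->
  exists j, (j < n)%nat /\ forall i, (i < n)%nat -> f (P i) <= f (P j).
Proof.
  induction n as [|n IH]; intros Hn; [lia|].
  destruct n as [|n].
  - exists 0%nat; split; [lia|]. intros i Hi; replace i with 0%nat by lia; lra.
  - destruct (IH ltac:(lia)) as [j [Hj Hm]].
    destruct (Rle_dec (f (P (S n))) (f (P j))) as [Hle|Hgt].
    + exists j; split; [lia|]. intros i Hi.
      destruct (Nat.eq_dec i (S n)); [subst; auto|]. apply Hm; lia.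
    + exists (S n); split; [lia|]. intros i Hi.
      destruct (Nat.eq_dec i (S n)); [subst; lra|]. specialize (Hm i ltac:(lia)); lra.
Qed.

(* Look at the robots extremal for [f]: a map fixing a finite set cannot translate it
   along [f]. *)
Lemma iso_img_fixed_no_shift (f : pt -> R) (d : R) n P h : (0 < n)%nat ->
  iso_img h (positions n P) = positions n P ->
  (forall q, f (iso_app h q) = f q + d) ->
  (forall q, f (iso_app (iso_inv h) q) = f q - d) -> d = 0.
Proof.
  intros Hn E Hh Hinv. destruct (ex_argmax f n P Hn) as [j [Hj Hm]].
  assert (A1 : positions n P (iso_app h (P j))) by (apply iso_img_fixed_mem; auto; exists j; auto).
  assert (A2 : positions n P (iso_app (iso_inv h) (P j)))
    by (apply iso_img_fixed_mem_inv; auto; exists j; auto).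
  destruct A1 as [k1 [Hk1 E1]]; destruct A2 as [k2 [Hk2 E2]].
  pose proof (Hm k1 Hk1) as M1; pose proof (Hm k2 Hk2) as M2.
  rewrite <- E1, Hh in M1; rewrite <- E2, Hinv in M2. lra.
Qed.

Lemma iso_fixing_positions n P h : (0 < n)%nat ->
  iso_img h (positions n P) = positions n P ->
  (forall q, iso_app h q = q) \/
  (exists c, mirror_symmetric (positions n P) c /\ forall q, iso_app h q = mirror c q).
Proof.
  intros Hn E.
  assert (Hy : shift_y h = 0).
  { apply (iso_img_fixed_no_shift snd (shift_y h) n P h Hn E); intro q;
      unfold iso_app, iso_inv; simpl; ring. }
  destruct h as [[] t u]; simpl in Hy; subst u.
  - right. exists (t / 2). split.
    + intros q Hq. replace (mirror (t/2) q) with (iso_app (mkIso true t 0) q).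
      * apply iso_img_fixed_mem; auto.
      * unfold iso_app, mirror; simpl; apply pt_eq; simpl; field.
    + intro q; unfold iso_app, mirror; simpl; apply pt_eq; simpl; field.
  - left.
    assert (Ht : t = 0).
    { apply (iso_img_fixed_no_shift fst t n P (mkIso false t 0) Hn E); intro q;
        unfold iso_app, iso_inv; simpl; ring. }
    subst t. intro q; unfold iso_app; simpl; apply pt_eq; simpl; ring.
Qed.

(** * Algorithms driven by a ranking of configurations *)

Definition orbit (S : pt -> Prop) : (pt -> Prop) -> Prop := fun X => exists g, X = iso_img g S.

Definition canon (S : pt -> Prop) : pt -> Prop :=
  epsilon (inhabits (fun _ : pt => False)) (orbit S).

Definition chart (X S : pt -> Prop) : iso := epsilon (inhabits iso_id) (fun g => X = iso_img g S).

Lemma orbit_iso_img g S : orbit (iso_img g S) = orbit S.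
Proof.
  apply functional_extensionality; intro X; apply propositional_extensionality; unfold orbit; split.
  - intros [h E]. exists (iso_comp h g). rewrite E, iso_img_comp; auto.
  - intros [h E]. exists (iso_comp h (iso_inv g)). rewrite E, <- iso_img_comp, iso_img_invK; auto.
Qed.

Lemma canon_iso_img g S : canon (iso_img g S) = canon S.
Proof. unfold canon. rewrite orbit_iso_img. auto. Qed.

Lemma canon_in_orbit S : exists k, canon S = iso_img k S.
Proof.
  unfold canon. apply (epsilon_spec (inhabits (fun _ : pt => False)) (orbit S)).
  exists S, iso_id. rewrite iso_img_id; auto.
Qed.

Lemma chart_spec X S k : X = iso_img k S -> X = iso_img (chart X S) S.
Proof.
  intro E. unfold chart. apply (epsilon_spec (inhabits iso_id) (fun g => X = iso_img g S)). eauto.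
Qed.

Lemma ex_minimal_nat (P : nat -> Prop) :
  (exists k, P k) -> exists k, P k /\ forall k', P k' -> (k <= k')%nat.
Proof.
  intros [k Hk]. revert Hk. induction k as [k IH] using (well_founded_induction Nat.lt_wf_0).
  intros Hk. destruct (classic (exists k', P k' /\ (k' < k)%nat)) as [[k' [H1 H2]]|Hn].
  - apply (IH k' H2 H1).
  - exists k; split; auto. intros k' Hk'. destruct (Nat.lt_ge_cases k' k); auto.
    exfalso; apply Hn; eauto.
Qed.

Definition moves_like (n : nat) (S : pt -> Prop) (Q Q' : config) (M D : pt) : Prop :=
  forall i, (i < n)%nat -> Q' i = Q i \/ (Q i = M /\ Q' i = D) \/
     (exists c, mirror_symmetric S c /\ Q i = mirror c M /\ Q' i = mirror c D).

Section RankedAlgorithm.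

Variable has_rank : (pt -> Prop) -> nat -> Prop.
Variable move_spec : (pt -> Prop) -> nat -> pt -> pt -> Prop.

Definition orbit_rank (X : pt -> Prop) : nat :=
  epsilon (inhabits 0%nat) (fun k => (exists g, has_rank (iso_img g X) k) /\
                                   forall g k', has_rank (iso_img g X) k' -> (k <= k')%nat).

Definition canon_spec (X : pt -> Prop) (md : pt * pt) : Prop :=
  exists g, has_rank (iso_img g X) (orbit_rank X) /\
            move_spec (iso_img g X) (orbit_rank X) (iso_app g (fst md)) (iso_app g (snd md)).

Definition canon_move (X : pt -> Prop) : pt * pt :=
  epsilon (inhabits ((0, 0), (0, 0))) (canon_spec X).

(* In local coordinates, [h] is a symmetry of the canonical representative that carries the
   planned mover to the robot's own position [p]. *)
Definition self_match (p : pt) (Sl : pt -> Prop) (h : iso) : Prop :=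
  iso_img h (canon Sl) = canon Sl /\
  iso_app h (fst (canon_move (canon Sl))) = iso_app (chart (canon Sl) Sl) p.

Definition algo : algorithm := fun p Sl =>
  if excluded_middle_informative (exists h, self_match p Sl h)
  then iso_app (iso_inv (chart (canon Sl) Sl))
         (iso_app (epsilon (inhabits iso_id) (self_match p Sl)) (snd (canon_move (canon Sl))))
  else p.

Variables (n : nat) (a : R).
Hypothesis n_pos : (0 < n)%nat.
Hypothesis rank_total : forall Q, no_overlap n Q -> exists m, has_rank (positions n Q) m.
Hypothesis spec_total : forall Q m, no_overlap n Q -> has_rank (positions n Q) m ->
  (forall m', has_rank (positions n Q) m' -> (m <= m')%nat) ->
  exists M D, move_spec (positions n Q) m M D.
Hypothesis spec_mover : forall Q m M D, no_overlap n Q -> move_spec (positions n Q) m M D ->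
  (exists i, (i < n)%nat /\ Q i = M) /\ ((0 < m)%nat -> D <> M).
Hypothesis spec_step : forall Q Q' m M D, no_overlap n Q -> move_spec (positions n Q) m M D ->
  moves_like n (positions n Q) Q Q' M D ->
  collision_free_move n Q Q' /\
  ((forall i, (i < n)%nat -> Q' i = Q i) \/
   exists m' g, (m' < m)%nat /\ has_rank (positions n (map_config g Q')) m').
Hypothesis rank0_final : forall Q g, no_overlap n Q ->
  has_rank (positions n (map_config g Q)) 0%nat -> uniform_circle n a Q.

Definition potential (P : config) : nat := orbit_rank (canon (positions n P)).

Lemma potential_spec P : no_overlap n P ->
  (exists g, has_rank (iso_img g (canon (positions n P))) (potential P)) /\
  (forall g k', has_rank (iso_img g (canon (positions n P))) k' -> (potential P <= k')%nat).
Proof.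
  intros Hno. unfold potential, orbit_rank. apply (epsilon_spec (inhabits 0%nat)).
  destruct (canon_in_orbit (positions n P)) as [k0 E0].
  destruct (ex_minimal_nat (fun k => exists g, has_rank (iso_img g (canon (positions n P))) k))
    as [k [Hk Hmin]].
  - destruct (rank_total (map_config k0 P)) as [m Hm]; [apply no_overlap_map_config; auto|].
    exists m, iso_id. rewrite iso_img_id, E0, iso_img_positions; auto.
  - exists k; split; auto. intros g k' H. apply Hmin; eauto.
Qed.

Lemma potential_le P g m : no_overlap n P ->
  has_rank (positions n (map_config g P)) m -> (potential P <= m)%nat.
Proof.
  intros Hno HR. destruct (canon_in_orbit (positions n P)) as [k E].
  apply (proj2 (potential_spec P Hno) (iso_comp g (iso_inv k))).
  rewrite E, <- iso_img_comp, iso_img_invK, iso_img_positions. auto.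
Qed.

Lemma potential_ext P P' : (forall i, (i < n)%nat -> P' i = P i) -> potential P' = potential P.
Proof. intros H. unfold potential. rewrite (positions_ext n P P' H). auto. Qed.

Lemma canon_move_spec P : no_overlap n P ->
  canon_spec (canon (positions n P)) (canon_move (canon (positions n P))).
Proof.
  intros Hno. pose proof (potential_spec P Hno) as [[g1 Hg1] Hmin].
  unfold canon_move. apply epsilon_spec.
  destruct (canon_in_orbit (positions n P)) as [k0 E0].
  assert (Eq : iso_img g1 (canon (positions n P)) = positions n (map_config (iso_comp g1 k0) P)).
  { rewrite E0, iso_img_comp, iso_img_positions; auto. }
  rewrite Eq in Hg1.
  destruct (spec_total (map_config (iso_comp g1 k0) P) (potential P)) as [M [D HS]]; auto.
  - apply no_overlap_map_config; auto.
  - intros m' Hm'. apply (Hmin g1). rewrite Eq; auto.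
  - exists (iso_app (iso_inv g1) M, iso_app (iso_inv g1) D), g1. simpl.
    rewrite !iso_app_Kinv. unfold potential in *. rewrite Eq. split; auto.
Qed.

Definition mover (P : config) (i : nat) : Prop :=
  exists k h, canon (positions n P) = iso_img k (positions n P) /\
    iso_img h (canon (positions n P)) = canon (positions n P) /\
    iso_app h (fst (canon_move (canon (positions n P)))) = iso_app k (P i).

Lemma mover_ext P P' i : (forall j, (j < n)%nat -> P' j = P j) -> (i < n)%nat ->
  mover P i -> mover P' i.
Proof. intros H Hi Hm. unfold mover. rewrite (positions_ext n P P' H), (H i Hi). exact Hm. Qed.

Section OneRobot.

Variables (F : nat -> frame) (act : nat -> bool) (P : config) (i : nat) (g0 k0 : iso).
Hypothesis canon_k0 : canon (positions n P) = iso_img k0 (positions n P).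

Let L := frame_iso (F i).
Let X := canon (positions n P).
Let md := canon_move X.
Let P' := step n algo F act P.

Lemma step_matched : act i = true ->
  (exists h, self_match (iso_app L (P i)) (iso_img L (positions n P)) h) ->
  exists tau, iso_img tau (iso_img g0 X) = iso_img g0 X /\
    iso_app tau (iso_app g0 (fst md)) = iso_app (iso_comp g0 k0) (P i) /\
    iso_app (iso_comp g0 k0) (P' i) = iso_app tau (iso_app g0 (snd md)).
Proof.
  intros Ha Hex. unfold P', step. rewrite Ha, snapshot_iso_img, to_local_iso, to_global_iso.
  fold L. unfold algo. destruct (excluded_middle_informative _) as [_|Hnex]; [|contradiction].
  set (h := epsilon (inhabits iso_id) (self_match (iso_app L (P i)) (iso_img L (positions n P)))).
  assert (Hh : self_match (iso_app L (P i)) (iso_img L (positions n P)) h)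
    by (apply epsilon_spec; auto).
  unfold self_match in Hh. rewrite canon_iso_img in Hh. rewrite !canon_iso_img.
  fold X in Hh |- *. fold md in Hh |- *. destruct Hh as [Hst Hm].
  set (gi := chart X (iso_img L (positions n P))) in *.
  assert (Egi : X = iso_img gi (iso_img L (positions n P))).
  { apply (chart_spec X _ (iso_comp k0 (iso_inv L))). rewrite <- iso_img_comp, iso_img_invK; auto. }
  exists (iso_comp (iso_comp g0 k0)
    (iso_comp (iso_inv L) (iso_comp (iso_inv gi) (iso_comp h (iso_inv g0))))).
  split; [|split].
  - rewrite <- !iso_img_comp, iso_img_invK, Hst.
    assert (E1 : iso_img (iso_inv gi) X = iso_img L (positions n P))
      by (rewrite Egi at 1; apply iso_img_invK).
    rewrite E1, iso_img_invK, <- canon_k0. auto.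
  - rewrite !iso_app_comp, iso_app_invK, Hm, iso_app_invK, iso_app_invK. auto.
  - rewrite !iso_app_comp, iso_app_invK. auto.
Qed.

Lemma step_unmatched :
  ~ (exists h, self_match (iso_app L (P i)) (iso_img L (positions n P)) h) -> P' i = P i.
Proof.
  intros Hnex. unfold P', step. destruct (act i); auto.
  rewrite snapshot_iso_img, to_local_iso, to_global_iso. fold L. unfold algo.
  destruct (excluded_middle_informative _) as [Hex|_]; [contradiction|]. apply iso_app_invK.
Qed.

Lemma mover_self_match : mover P i ->
  exists h, self_match (iso_app L (P i)) (iso_img L (positions n P)) h.
Proof.
  intros [k [h0 [Ek [Eh0 Em]]]]. fold X md in Ek, Eh0, Em.
  set (gi := chart X (iso_img L (positions n P))).
  assert (Egi : X = iso_img gi (iso_img L (positions n P))).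
  { apply (chart_spec X _ (iso_comp k0 (iso_inv L))). rewrite <- iso_img_comp, iso_img_invK; auto. }
  exists (iso_comp (iso_comp gi L) (iso_comp (iso_inv k) h0)).
  unfold self_match. rewrite canon_iso_img. fold X md gi. split.
  - rewrite <- !iso_img_comp, Eh0. rewrite Ek at 1. rewrite iso_img_invK. symmetry; auto.
  - rewrite !iso_app_comp, Em, iso_app_invK. auto.
Qed.

End OneRobot.

Lemma step_moves_like F act P g0 k0 :
  canon (positions n P) = iso_img k0 (positions n P) ->
  let Q := map_config (iso_comp g0 k0) P in
  let md := canon_move (canon (positions n P)) in
  moves_like n (positions n Q) Q (map_config (iso_comp g0 k0) (step n algo F act P))
    (iso_app g0 (fst md)) (iso_app g0 (snd md)).
Proof.
  intros E0 Q md i Hi.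
  assert (EQ : positions n Q = iso_img g0 (canon (positions n P))).
  { unfold Q. rewrite <- iso_img_positions, <- iso_img_comp, <- E0. auto. }
  destruct (classic (exists h, self_match (iso_app (frame_iso (F i)) (P i))
      (iso_img (frame_iso (F i)) (positions n P)) h)) as [Hex|Hnex].
  - destruct (act i) eqn:Ea.
    + right. destruct (step_matched F act P i g0 k0 E0 Ea Hex) as [tau [Ht [Hm Hd]]].
      rewrite <- EQ in Ht. unfold Q, map_config.
      destruct (iso_fixing_positions n Q tau n_pos Ht) as [Hid|[c [Hsym Hrf]]].
      * left. rewrite Hid in Hm, Hd. auto.
      * right. exists c. rewrite Hrf in Hm, Hd. auto.
    + left. unfold Q, map_config, step. rewrite Ea. auto.
  - left. unfold Q, map_config. f_equal. apply (step_unmatched F act P i Hnex).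
Qed.

Lemma step_progress F act P : no_overlap n P ->
  let P' := step n algo F act P in
  collision_free_move n P P' /\
  ((forall i, (i < n)%nat -> P' i = P i) \/ (potential P' < potential P)%nat) /\
  (forall i, (i < n)%nat -> mover P i -> act i = true ->
     (0 < potential P)%nat -> (potential P' < potential P)%nat).
Proof.
  intros Hno P'.
  pose proof (canon_move_spec P Hno) as [g0 [HR HS]].
  destruct (canon_in_orbit (positions n P)) as [k0 E0].
  pose proof (step_moves_like F act P g0 k0 E0) as HMv.
  set (Q := map_config (iso_comp g0 k0) P) in *.
  set (Q' := map_config (iso_comp g0 k0) P') in *.
  assert (EQ : positions n Q = iso_img g0 (canon (positions n P))).
  { unfold Q. rewrite <- iso_img_positions, <- iso_img_comp, <- E0. auto. }
  rewrite <- EQ in HR, HS.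
  assert (HnoQ : no_overlap n Q) by (apply no_overlap_map_config; auto).
  destruct (spec_step Q Q' _ _ _ HnoQ HS HMv) as [Hcf Hdisj].
  assert (Hcf' : collision_free_move n P P')
    by (apply (collision_free_move_map_config n (iso_comp g0 k0)); auto).
  assert (HnoP' : no_overlap n P') by (apply (collision_free_move_end n P); auto).
  assert (Hdec :
    (exists m' g, (m' < potential P)%nat /\ has_rank (positions n (map_config g Q')) m') ->
                 (potential P' < potential P)%nat).
  { intros [m' [g [Hlt Hm']]].
    assert (E : map_config g Q' = map_config (iso_comp g (iso_comp g0 k0)) P').
    { unfold map_config, Q'. apply functional_extensionality; intro i. rewrite iso_app_comp; auto. }
    rewrite E in Hm'. pose proof (potential_le P' _ m' HnoP' Hm'). lia. }
  split; [auto|split].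
  - destruct Hdisj as [Hu|Hd]; [left|right; auto].
    intros i Hi. apply (iso_app_inj (iso_comp g0 k0)), (Hu i Hi).
  - intros i0 Hi0 Hmov Ea Hpos. destruct Hdisj as [Hu|Hd]; [exfalso|auto].
    destruct (step_matched F act P i0 g0 k0 E0 Ea (mover_self_match F P i0 k0 E0 Hmov))
      as [tau [_ [Hm Hd]]].
    destruct (spec_mover Q _ _ _ HnoQ HS) as [_ Hne].
    specialize (Hu i0 Hi0). unfold Q', Q, map_config in Hu. fold P' in Hd. rewrite Hd, <- Hm in Hu.
    apply (Hne Hpos), (iso_app_inj tau); auto.
Qed.

Lemma mover_exists P : no_overlap n P -> (0 < potential P)%nat -> exists i, (i < n)%nat
  /\ mover P i.
Proof.
  intros Hno Hpos.
  pose proof (canon_move_spec P Hno) as [g0 [HR HS]].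
  destruct (canon_in_orbit (positions n P)) as [k0 E0].
  assert (EQ : positions n (map_config (iso_comp g0 k0) P) = iso_img g0 (canon (positions n P))).
  { rewrite <- iso_img_positions, <- iso_img_comp, <- E0. auto. }
  rewrite <- EQ in HS.
  destruct (spec_mover _ _ _ _ (proj2 (no_overlap_map_config n (iso_comp g0 k0) P) Hno) HS)
    as [[i [Hi Ei]] _].
  exists i; split; auto. exists k0, iso_id. split; auto. split; [apply iso_img_id|].
  rewrite iso_app_id. unfold map_config in Ei. rewrite iso_app_comp in Ei. apply iso_app_inj in Ei.
    auto.
Qed.

Section Execution.

Variables (F : nat -> frame) (P0 : config) (act : nat -> nat -> bool).
Hypothesis no_overlap0 : no_overlap n P0.
Hypothesis fair : valid_schedule n act.

Let C := exec n algo F act P0.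

Lemma exec_no_overlap k : no_overlap n (C k).
Proof.
  induction k; [exact no_overlap0|]. change (C (S k)) with (step n algo F (act k) (C k)).
  apply (collision_free_move_end n (C k)), (step_progress F (act k) (C k) IHk).
Qed.

Lemma exec_collision_free k : collision_free_move n (C k) (C (S k)).
Proof. apply (step_progress F (act k) (C k) (exec_no_overlap k)). Qed.

(* Until the mover is activated nothing changes; when it is, the potential drops. *)
Lemma exec_potential_decreases k : (0 < potential (C k))%nat ->
  exists k', (potential (C k') < potential (C k))%nat.
Proof.
  intros Hpos.
  destruct (mover_exists (C k) (exec_no_overlap k) Hpos) as [i0 [Hi0 Hmov]].
  destruct (proj2 fair i0 Hi0 k) as [k1 [Hk1 Ha]].
  assert (Hstay : forall d, (forall i, (i < n)%nat -> C (k + d)%nat i = C k i) \/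
                   exists k', (potential (C k') < potential (C k))%nat).
  { induction d as [|d IHd].
    - left. intros i _. rewrite Nat.add_0_r. auto.
    - destruct IHd as [Hu|Hd]; [|right; auto].
      replace (k + S d)%nat with (S (k + d)) by lia.
      destruct (step_progress F (act (k + d)%nat) (C (k + d)%nat) (exec_no_overlap _))
        as [_ [[Hu2|Hd2] _]].
      + left. intros i Hi.
        change (C (S (k + d)) i) with (step n algo F (act (k + d)%nat) (C (k + d)%nat) i).
        rewrite Hu2; auto.
      + right. exists (S (k + d)). rewrite (potential_ext (C k) (C (k + d)%nat) Hu) in Hd2. auto. }
  destruct (Hstay (k1 - k)%nat) as [Hu|Hd]; [|auto].
  replace (k + (k1 - k))%nat with k1 in Hu by lia.
  exists (S k1). pose proof (potential_ext (C k) (C k1) Hu) as Ep.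
  destruct (step_progress F (act k1) (C k1) (exec_no_overlap _)) as [_ [_ H3]].
  rewrite <- Ep. apply H3 with i0; auto.
  - apply (mover_ext (C k)); auto.
  - rewrite Ep; auto.
Qed.

Lemma exec_potential_zero : exists k, potential (C k) = 0%nat.
Proof.
  assert (H : forall v k, potential (C k) = v -> exists k', potential (C k') = 0%nat).
  { intro v. induction v as [v IH] using (well_founded_induction Nat.lt_wf_0).
    intros k Hv. destruct (Nat.eq_dec v 0) as [E|E]; [subst; eauto|].
    destruct (exec_potential_decreases k ltac:(lia)) as [k' Hk'].
    apply (IH (potential (C k'))) with k'; [lia|auto]. }
  apply (H _ 0%nat eq_refl).
Qed.

Lemma exec_uniform_circle : exists k, uniform_circle n a (C k).
Proof.
  destruct exec_potential_zero as [k Hk]. exists k.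
  destruct (potential_spec (C k) (exec_no_overlap k)) as [[g Hg] _].
  destruct (canon_in_orbit (positions n (C k))) as [k0 E0].
  rewrite Hk, E0, iso_img_comp, iso_img_positions in Hg.
  apply (rank0_final (C k) (iso_comp g k0)); auto. apply exec_no_overlap.
Qed.

End Execution.

Theorem ranked_algorithm_correct :
  forall (F : nat -> frame) (P0 : config) (act : nat -> nat -> bool),
    no_overlap n P0 -> valid_schedule n act ->
    (exists k, uniform_circle n a (exec n algo F act P0 k)) /\
    (forall k, collision_free_move n (exec n algo F act P0 k) (exec n algo F act P0 (S k))).
Proof.
  intros F P0 act Hno Hfair. split.
  - apply (exec_uniform_circle F P0 act Hno Hfair).
  - apply (exec_collision_free F P0 act Hno).
Qed.

End RankedAlgorithm.

(** * Regular polygons *)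

(* [ngon_pt n pd K] is the point at angle [K * PI / n], measured clockwise from the top, on the
   circle of center [(ngon_cx pd, ngon_cy pd)] and radius [ngon_r pd]. Its slots, the points with
   [K] of the parity of [ngon_parity pd], are the vertices of a regular n-gon with a vertex on
   top (parity 0) or a horizontal top side (parity 1). *)
Definition ang (n : nat) (K : Z) : R := IZR K * PI / INR n.

Record ngon := mkNgon { ngon_cx : R; ngon_cy : R; ngon_r : R; ngon_parity : Z }.

Definition ngon_pt n (pd : ngon) (K : Z) : pt :=
  (ngon_cx pd + ngon_r pd * sin (ang n K), ngon_cy pd + ngon_r pd * cos (ang n K)).

Definition slot n pd q := exists K, Z.Even (K - ngon_parity pd) /\ q = ngon_pt n pd K.

Lemma sin_periodZ x (m : Z) : sin (x + 2 * IZR m * PI) = sin x.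
Proof.
  destruct (Z_le_gt_dec 0 m) as [H|H].
  - rewrite <- (Z2Nat.id m H), <- INR_IZR_INZ. apply sin_period.
  - assert (E : x = (x + 2 * IZR m * PI) + 2 * INR (Z.to_nat (- m)) * PI).
    { rewrite INR_IZR_INZ, Z2Nat.id by lia. rewrite opp_IZR. ring. }
    rewrite E at 2. symmetry; apply sin_period.
Qed.

Lemma cos_periodZ x (m : Z) : cos (x + 2 * IZR m * PI) = cos x.
Proof.
  destruct (Z_le_gt_dec 0 m) as [H|H].
  - rewrite <- (Z2Nat.id m H), <- INR_IZR_INZ. apply cos_period.
  - assert (E : x = (x + 2 * IZR m * PI) + 2 * INR (Z.to_nat (- m)) * PI).
    { rewrite INR_IZR_INZ, Z2Nat.id by lia. rewrite opp_IZR. ring. }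
    rewrite E at 2. symmetry; apply cos_period.
Qed.

Lemma INR_gt1_pos n : (1 < n)%nat -> 0 < INR n.
Proof. intro; apply lt_0_INR; lia. Qed.

Lemma ang_shift n K m : (1 < n)%nat -> ang n (K + 2 * Z.of_nat n * m) = ang n K + 2 * IZR m * PI.
Proof.
  intro Hn. unfold ang. rewrite plus_IZR, !mult_IZR, <- INR_IZR_INZ.
  pose proof (INR_gt1_pos n Hn). field. lra.
Qed.

Lemma ngon_pt_shift n pd K m : (1 < n)%nat ->
  ngon_pt n pd (K + 2 * Z.of_nat n * m) = ngon_pt n pd K.
Proof.
  intro Hn. unfold ngon_pt. rewrite ang_shift by auto. rewrite sin_periodZ, cos_periodZ. auto.
Qed.

Lemma reduce_index n K : (1 < n)%nat -> exists K' m, K = (K' + 2 * Z.of_nat n * m)%Z /\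
   (- Z.of_nat n < K' <= Z.of_nat n)%Z.
Proof.
  intro Hn. set (N := Z.of_nat n).
  assert (HN : (0 < 2 * N)%Z) by (unfold N; lia).
  pose proof (Z.mod_pos_bound K (2 * N) HN) as Hb.
  pose proof (Z.div_mod K (2 * N) ltac:(lia)) as Hd.
  destruct (Z_le_gt_dec (K mod (2 * N)) N).
  - exists (K mod (2*N))%Z, (K / (2*N))%Z. split; [lia|lia].
  - exists (K mod (2*N) - 2 * N)%Z, (K / (2*N) + 1)%Z. split; [lia|lia].
Qed.

Lemma ang_abs n K : (1 < n)%nat -> (- Z.of_nat n <= K <= Z.of_nat n)%Z ->
  0 <= ang n (Z.abs K) <= PI.
Proof.
  intros Hn HK. unfold ang. pose proof (INR_gt1_pos n Hn). pose proof PI_RGT_0.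
  assert (H1 : 0 <= IZR (Z.abs K)) by (apply IZR_le; lia).
  assert (H2 : IZR (Z.abs K) <= INR n) by (rewrite INR_IZR_INZ; apply IZR_le; lia).
  split.
  - apply Rmult_le_pos; [apply Rmult_le_pos; lra|]. left; apply Rinv_0_lt_compat; lra.
  - apply (Rmult_le_reg_r (INR n)); auto. unfold Rdiv. rewrite Rmult_assoc, Rinv_l by lra. nra.
Qed.

Lemma cos_ang_abs n K : cos (ang n K) = cos (ang n (Z.abs K)).
Proof.
  destruct (Z_le_gt_dec 0 K).
  - rewrite Z.abs_eq by lia; auto.
  - rewrite Z.abs_neq by lia. unfold ang. rewrite opp_IZR.
    replace (- IZR K * PI / INR n) with (- (IZR K * PI / INR n)) by (unfold Rdiv; ring).
    rewrite cos_neg; auto.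
Qed.

Lemma ang_lt n K1 K2 : (1 < n)%nat -> (K1 < K2)%Z -> ang n K1 < ang n K2.
Proof.
  intros Hn H. unfold ang. pose proof (INR_gt1_pos n Hn). pose proof PI_RGT_0.
  apply IZR_lt in H. unfold Rdiv. apply Rmult_lt_compat_r. apply Rinv_0_lt_compat; lra.
  nra.
Qed.

Lemma cos_ang_lt n K1 K2 : (1 < n)%nat -> (0 <= K1)%Z -> (K1 < K2)%Z -> (K2 <= Z.of_nat n)%Z ->
  cos (ang n K2) < cos (ang n K1).
Proof.
  intros Hn H1 H12 H2.
  pose proof (ang_abs n K1 Hn ltac:(lia)) as A1. pose proof (ang_abs n K2 Hn ltac:(lia)) as A2.
  rewrite Z.abs_eq in A1, A2 by lia.
  apply cos_decreasing_1; try lra. apply ang_lt; auto.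
Qed.

Lemma sin_pi_n_pos n : (1 < n)%nat -> 0 < sin (PI / INR n).
Proof.
  intro Hn. apply sin_gt_0.
  - pose proof (INR_gt1_pos n Hn). pose proof PI_RGT_0. apply Rdiv_lt_0_compat; lra.
  - pose proof PI_RGT_0. assert (1 < INR n) by (apply lt_1_INR; lia).
    apply (Rmult_lt_reg_r (INR n)); [lra|]. unfold Rdiv. rewrite Rmult_assoc, Rinv_l by lra. nra.
Qed.

Definition dist2 (p q : pt) : R := (fst p - fst q)^2 + (snd p - snd q)^2.

Lemma ang_sub n K K' : ang n (K - K') = ang n K - ang n K'.
Proof. unfold ang. rewrite minus_IZR. unfold Rdiv; ring. Qed.

Lemma dist2_ngon_pt n pd K K' :
  dist2 (ngon_pt n pd K) (ngon_pt n pd K') = (ngon_r pd)^2 * (2 - 2 * cos (ang n (K - K'))).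
Proof.
  unfold dist2, ngon_pt; simpl. rewrite ang_sub, cos_minus.
  pose proof (sin2_cos2 (ang n K)) as H1. pose proof (sin2_cos2 (ang n K')) as H2.
  unfold Rsqr in H1, H2. nra.
Qed.

Lemma cos_ang_le n K1 K2 : (1 < n)%nat -> (0 <= K1)%Z -> (K1 <= K2)%Z -> (K2 <= Z.of_nat n)%Z ->
  cos (ang n K2) <= cos (ang n K1).
Proof. intros. destruct (Z.eq_dec K1 K2); [subst; lra|]. left; apply cos_ang_lt; auto; lia. Qed.

Lemma ang_0 n : ang n 0 = 0.
Proof. unfold ang. simpl. unfold Rdiv; ring. Qed.

Lemma ang_n n : (1 < n)%nat -> ang n (Z.of_nat n) = PI.
Proof. intro Hn. unfold ang. rewrite <- INR_IZR_INZ. pose proof (INR_gt1_pos n Hn). field. lra. Qed.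

Lemma ang_2 n : ang n 2 = 2 * (PI / INR n).
Proof. unfold ang. simpl. unfold Rdiv; ring. Qed.

Lemma ang_1 n : ang n 1 = PI / INR n.
Proof. unfold ang. simpl. unfold Rdiv; ring. Qed.

Lemma reduce_even n K e : (1 < n)%nat -> Z.Even (K - e) ->
  exists K' m, K = (K' + 2 * Z.of_nat n * m)%Z /\ (- Z.of_nat n < K' <= Z.of_nat n)%Z
    /\ Z.Even (K' - e).
Proof.
  intros Hn [j Hj]. destruct (reduce_index n K Hn) as [K' [m [E B]]].
  exists K', m. split; auto. split; auto. exists (j - Z.of_nat n * m)%Z. lia.
Qed.

Lemma slot_chord n pd q q' : (1 < n)%nat -> slot n pd q -> slot n pd q' -> q <> q' ->
  dist2 q q' >= (2 * ngon_r pd * sin (PI / INR n))^2.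
Proof.
  intros Hn [K [HK Eq]] [K' [HK' Eq']] Hne. subst q q'. rewrite dist2_ngon_pt.
  assert (HJ : Z.Even (K - K' - 0)).
  { destruct HK as [j Hj]; destruct HK' as [j' Hj']. exists (j - j')%Z. lia. }
  destruct (reduce_even n (K - K') 0 Hn HJ) as [J [m [EJ [BJ [h Hh]]]]].
  assert (Hc : cos (ang n (K - K')) = cos (ang n J)).
  { rewrite EJ. rewrite ang_shift by auto. apply cos_periodZ. }
  destruct (Z.eq_dec J 0) as [E0|E0].
  - exfalso. apply Hne. replace K with (K' + 2 * Z.of_nat n * m)%Z by lia.
    apply ngon_pt_shift; auto.
  - rewrite Hc, cos_ang_abs.
    assert (Hle : cos (ang n (Z.abs J)) <= cos (ang n 2)) by (apply cos_ang_le; auto; lia).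
    rewrite ang_2 in Hle. rewrite cos_2a_sin in Hle.
    assert (0 <= (ngon_r pd)^2) by nra. nra.
Qed.

Lemma slot_height n pd q : (1 < n)%nat -> 0 < ngon_r pd ->
  (ngon_parity pd = 0 \/ ngon_parity pd = 1)%Z -> slot n pd q ->
  snd q < ngon_cy pd + ngon_r pd * cos (ang n (ngon_parity pd)) \/ q = ngon_pt n pd (ngon_parity pd)
    \/ q = ngon_pt n pd (- ngon_parity pd).
Proof.
  intros Hn Hr He [K [HK Eq]]. subst q.
  destruct (reduce_even n K (ngon_parity pd) Hn HK) as [K' [m [E [B [h Hh]]]]].
  rewrite E, ngon_pt_shift by auto.
  destruct (Z.eq_dec (Z.abs K') (ngon_parity pd)) as [Ea|Ea].
  - right. destruct (Z_le_gt_dec 0 K'); [left|right]; f_equal; lia.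
  - left. unfold ngon_pt; simpl. rewrite cos_ang_abs.
    assert (cos (ang n (Z.abs K')) < cos (ang n (ngon_parity pd))) by (apply cos_ang_lt; auto; lia).
      nra.
Qed.

Lemma slot_bounds n pd q : 0 <= ngon_r pd -> slot n pd q ->
  Rabs (fst q - ngon_cx pd) <= ngon_r pd /\ ngon_cy pd - ngon_r pd <= snd q.
Proof.
  intros Hr [K [_ E]]; subst; unfold ngon_pt; simpl.
  pose proof (SIN_bound (ang n K)); pose proof (COS_bound (ang n K)).
  replace (ngon_cx pd + ngon_r pd * sin (ang n K) - ngon_cx pd) with (ngon_r pd * sin (ang n K)) by
    ring.
  rewrite Rabs_mult, Rabs_right by lra. split; [|nra].
  assert (Rabs (sin (ang n K)) <= 1) by (apply Rabs_le; lra). nra.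
Qed.

Lemma slot_axis n pd q : (1 < n)%nat -> 0 < ngon_r pd -> slot n pd q -> fst q = ngon_cx pd ->
  q = ngon_pt n pd 0 \/ q = ngon_pt n pd (Z.of_nat n).
Proof.
  intros Hn Hr [K [HK Eq]] Hx. subst q.
  destruct (reduce_index n K Hn) as [K' [m [E B]]].
  rewrite E, ngon_pt_shift in * by auto. unfold ngon_pt in Hx; simpl in Hx.
  assert (Hs : sin (ang n K') = 0) by (apply (Rmult_eq_reg_l (ngon_r pd)); lra).
  destruct (Z.eq_dec K' 0) as [->|N0]; [auto|].
  destruct (Z.eq_dec K' (Z.of_nat n)) as [->|Nn]; [auto|].
  exfalso. pose proof (ang_abs n K' Hn ltac:(lia)) as A.
  destruct (Z_le_gt_dec 0 K').
  - rewrite Z.abs_eq in A by lia.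
    assert (0 < sin (ang n K')).
    { apply sin_gt_0. pose proof (ang_lt n 0 K' Hn ltac:(lia)); rewrite ang_0 in *; lra.
      pose proof (ang_lt n K' (Z.of_nat n) Hn ltac:(lia)); rewrite ang_n in *; auto. }
    lra.
  - rewrite Z.abs_neq in A by lia.
    assert (0 < sin (ang n (- K'))).
    { apply sin_gt_0. pose proof (ang_lt n 0 (-K') Hn ltac:(lia)); rewrite ang_0 in *; lra.
      pose proof (ang_lt n (-K') (Z.of_nat n) Hn ltac:(lia)); rewrite ang_n in *; auto. }
    unfold ang in H. rewrite opp_IZR in H.
    replace (- IZR K' * PI / INR n) with (- (IZR K' * PI / INR n)) in H by (unfold Rdiv; ring).
    rewrite sin_neg in H. unfold ang in Hs. lra.
Qed.

Lemma slot_bottom n pd q : (1 < n)%nat -> 0 < ngon_r pd -> slot n pd q ->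
  snd q <= ngon_cy pd - ngon_r pd ->
  q = ngon_pt n pd (Z.of_nat n).
Proof.
  intros Hn Hr [K [HK Eq]] Hy. subst q.
  destruct (reduce_index n K Hn) as [K' [m [E B]]].
  rewrite E, ngon_pt_shift in * by auto. unfold ngon_pt in Hy; simpl in Hy.
  destruct (Z.eq_dec (Z.abs K') (Z.of_nat n)) as [Ea|Ea].
  - f_equal. lia.
  - exfalso. rewrite cos_ang_abs in Hy.
    assert (cos (ang n (Z.of_nat n)) < cos (ang n (Z.abs K'))) by (apply cos_ang_lt; auto; lia).
    rewrite ang_n in H by auto. rewrite cos_PI in H. nra.
Qed.

Lemma mirror_ngon_pt n pd K : mirror (ngon_cx pd) (ngon_pt n pd K) = ngon_pt n pd (- K).
Proof.
  unfold mirror, ngon_pt; simpl. unfold ang. rewrite opp_IZR.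
  replace (- IZR K * PI / INR n) with (- (IZR K * PI / INR n)) by (unfold Rdiv; ring).
  rewrite sin_neg, cos_neg. apply pt_eq; simpl; ring.
Qed.

Lemma slot_mirror n pd q : slot n pd q -> slot n pd (mirror (ngon_cx pd) q).
Proof.
  intros [K [[j Hj] E]]. subst. rewrite mirror_ngon_pt. exists (- K)%Z. split; auto.
  exists (- j - ngon_parity pd)%Z. lia.
Qed.

Definition corner n pd (k : nat) : pt := ngon_pt n pd (ngon_parity pd - 2 * Z.of_nat k).

Lemma corner_slot n pd k : slot n pd (corner n pd k).
Proof. exists (ngon_parity pd - 2 * Z.of_nat k)%Z. split; auto. exists (- Z.of_nat k)%Z. lia. Qed.

Lemma slot_corner n pd q : (1 < n)%nat -> slot n pd q -> exists k, (k < n)%nat /\ q = corner n pd k.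
Proof.
  intros Hn [K [[j Hj] E]]. subst q.
  set (N := Z.of_nat n).
  assert (HN : (0 < N)%Z) by (unfold N; lia).
  pose proof (Z.mod_pos_bound (- j) N HN) as Hb.
  pose proof (Z.div_mod (- j) N ltac:(lia)) as Hd.
  exists (Z.to_nat ((- j) mod N)). split.
  - apply Nat2Z.inj_lt. rewrite Z2Nat.id by lia. fold N; lia.
  - unfold corner. rewrite Z2Nat.id by lia.
    replace K with ((ngon_parity pd - 2 * ((- j) mod N)) + 2 * Z.of_nat n * (- ((- j) / N)))%Z
      by (unfold N in *; lia).
    apply ngon_pt_shift; auto.
Qed.

Lemma corner_inj n pd k k' : (1 < n)%nat -> 0 < ngon_r pd -> (k < n)%nat -> (k' < n)%nat ->
  corner n pd k = corner n pd k' -> k = k'.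
Proof.
  intros Hn Hr Hk Hk' E. destruct (Nat.eq_dec k k') as [|Ne]; auto. exfalso.
  assert (Hd : dist2 (corner n pd k) (corner n pd k') = 0) by (rewrite E; unfold dist2; ring).
  unfold corner in Hd. rewrite dist2_ngon_pt in Hd.
  set (J := (ngon_parity pd - 2 * Z.of_nat k - (ngon_parity pd - 2 * Z.of_nat k'))%Z) in *.
  destruct (reduce_index n J Hn) as [J' [m [EJ BJ]]].
  assert (Hc : cos (ang n J) = cos (ang n J')) by
    (rewrite EJ, ang_shift by auto; apply cos_periodZ).
  assert (J' <> 0%Z).
  { intro. subst J'. unfold J in EJ.
    destruct (Z.eq_dec m 0) as [->|Hm]; [lia|].
    assert (Z.abs m >= 1)%Z by lia.
    assert (Z.abs (Z.of_nat n * m) >= Z.of_nat n)%Z by (rewrite Z.abs_mul; nia). lia. }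
  rewrite Hc, cos_ang_abs in Hd.
  assert (cos (ang n (Z.abs J')) < cos (ang n 0)) by (apply cos_ang_lt; auto; lia).
  rewrite ang_0, cos_0 in H0. assert (0 < (ngon_r pd)^2) by nra. nra.
Qed.

Lemma corner_vertex n pd k : (1 < n)%nat ->
  corner n pd k
    = vertex (ngon_cx pd, ngon_cy pd) (ngon_r pd) (PI / 2 - IZR (ngon_parity pd) * PI / INR n) n k.
Proof.
  intro Hn. unfold corner, vertex, ngon_pt; simpl.
  assert (E : PI / 2 - IZR (ngon_parity pd) * PI / INR n + 2 * PI * INR k / INR n =
              PI / 2 - ang n (ngon_parity pd - 2 * Z.of_nat k)).
  { unfold ang. rewrite minus_IZR, mult_IZR, <- INR_IZR_INZ. pose proof (INR_gt1_pos n Hn). field.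
    apply Rgt_not_eq; lra. }
  rewrite E, cos_shift, sin_shift. auto.
Qed.

Lemma dist_dist2 p q : dist p q = sqrt (dist2 p q).
Proof. reflexivity. Qed.

Lemma dist_ge2_of_dist2 p q : 4 <= dist2 p q -> 2 <= dist p q.
Proof.
  intro H. rewrite dist_dist2. rewrite <- (sqrt_square 2) by lra. apply sqrt_le_1_alt. nra.
Qed.

Lemma dist2_ge4_of_dist p q : 2 <= dist p q -> 4 <= dist2 p q.
Proof.
  rewrite dist_dist2. intro H.
    assert (0 <= dist2 p q) by (unfold dist2; apply Rplus_le_le_0_compat; apply pow2_ge_0).
  pose proof (sqrt_sqrt (dist2 p q) H0). nra.
Qed.

Lemma side_corner n pd : (1 < n)%nat -> 0 <= ngon_r pd ->
  dist (corner n pd 0) (corner n pd 1) = 2 * ngon_r pd * sin (PI / INR n).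
Proof.
  intros Hn Hr. rewrite dist_dist2. unfold corner. rewrite dist2_ngon_pt.
  replace (ngon_parity pd - 2 * Z.of_nat 0 - (ngon_parity pd - 2 * Z.of_nat 1))%Z with 2%Z by
    (simpl; lia).
  rewrite ang_2, cos_2a_sin.
  replace ((ngon_r pd)^2 * (2 - 2 * (1 - 2 * sin (PI / INR n) * sin (PI / INR n))))
    with ((2 * ngon_r pd * sin (PI / INR n))^2) by ring.
  apply sqrt_pow2. pose proof (sin_pi_n_pos n Hn). nra.
Qed.


(** * Finite configurations *)

Lemma no_overlap_inj n Q i j : no_overlap n Q -> (i < n)%nat -> (j < n)%nat -> Q i = Q j -> i = j.
Proof.
  intros H Hi Hj E. destruct (Nat.eq_dec i j) as [|Ne]; auto. exfalso.
  specialize (H i j Hi Hj Ne). rewrite E in H. apply dist2_ge4_of_dist in H. unfold dist2 in H. nra.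
Qed.

Lemma no_overlap_dist2 n Q p q : no_overlap n Q -> positions n Q p -> positions n Q q -> p <> q ->
  4 <= dist2 p q.
Proof. intros H [i [Hi ->]] [j [Hj ->]] Ne. apply dist2_ge4_of_dist. apply H; auto. Qed.

Lemma positions_count_le n Q (l : list pt) : NoDup l -> (forall q, In q l -> positions n Q q) ->
  (length l <= n)%nat.
Proof.
  intros Hl Hin.
  assert (length l <= length (map Q (seq 0 n)))%nat; [|rewrite length_map, length_seq in H; auto].
  apply NoDup_incl_length; auto. intros q Hq. destruct (Hin q Hq) as [j [Hj ->]].
  apply in_map. apply in_seq. lia.
Qed.

Lemma positions_filter_list n Q (C : pt -> Prop) :
  (forall i j, (i < n)%nat -> (j < n)%nat -> Q i = Q j -> i = j) ->
  exists l, NoDup l /\ (forall q, In q l <-> (positions n Q q /\ C q)).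
Proof.
  intro Hinj.
  assert (G : forall m, (m <= n)%nat -> exists l, NoDup l /\
             (forall q, In q l <-> ((exists j, (j < m)%nat /\ q = Q j) /\ C q))).
  { induction m as [|m IH]; intro Hm.
    - exists nil. split; [constructor|]. intro q; simpl; split; [tauto|].
      intros [[j [Hj _]] _]; lia.
    - destruct (IH ltac:(lia)) as [l [Hl Hin]].
      destruct (classic (C (Q m))) as [Hc|Hc].
      + exists (Q m :: l). split.
        * constructor; auto. intro Hq. apply Hin in Hq. destruct Hq as [[j [Hj Ej]] _].
          apply Hinj in Ej; lia.
        * intro q; simpl; rewrite Hin; split.
          -- intros [<-|[[j [Hj ->]] Hc']]; [split; auto; exists m; split; auto; lia|].
             split; auto. exists j; split; auto; lia.
          -- intros [[j [Hj ->]] Hc']. destruct (Nat.eq_dec j m) as [->|Ne]; [left; auto|].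
             right. split; auto. exists j; split; auto; lia.
      + exists l. split; auto. intro q; rewrite Hin; split.
        * intros [[j [Hj ->]] Hc']. split; auto. exists j; split; auto; lia.
        * intros [[j [Hj ->]] Hc']. destruct (Nat.eq_dec j m) as [->|Ne]; [contradiction|].
          split; auto. exists j; split; auto; lia. }
  destruct (G n (le_n n)) as [l [Hl Hin]]. exists l; split; auto.
Qed.

Lemma positions_bounded n Q (f : pt -> R) : exists B, forall q, positions n Q q -> f q <= B.
Proof.
  induction n as [|n IH].
  - exists 0. intros q [j [Hj _]]; lia.
  - destruct IH as [B HB]. exists (Rmax B (f (Q n))). intros q [j [Hj ->]].
    destruct (Nat.eq_dec j n) as [->|Ne]; [apply Rmax_r|].
    eapply Rle_trans; [apply HB; exists j; split; auto; lia|apply Rmax_l].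
Qed.

Lemma positions_argmax n Q (C : pt -> Prop) (f : pt -> R) : (exists q, positions n Q q /\ C q) ->
  exists q, positions n Q q /\ C q /\ forall q', positions n Q q' -> C q' -> f q' <= f q.
Proof.
  induction n as [|n IH].
  - intros [q [[j [Hj _]] _]]; lia.
  - intros Hex. destruct (classic (exists q, positions n Q q /\ C q)) as [H|H].
    + destruct (IH H) as [q [Hq [Cq Hm]]].
      destruct (classic (C (Q n) /\ f q < f (Q n))) as [[Cn Hlt]|Hn].
      * exists (Q n). split; [exists n; split; auto|]. split; auto.
        intros q' [j [Hj ->]] Cq'. destruct (Nat.eq_dec j n) as [->|Ne]; [lra|].
        assert (f (Q j) <= f q) by (apply Hm; auto; exists j; split; auto; lia). lra.
      * exists q. split; [destruct Hq as [j [Hj ->]]; exists j; split; auto|]. split; auto.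
        intros q' [j [Hj ->]] Cq'. destruct (Nat.eq_dec j n) as [->|Ne].
        -- apply Rnot_lt_le. intro; apply Hn; auto.
        -- apply Hm; auto. exists j; split; auto; lia.
    + destruct Hex as [q [[j0 [Hj0 ->]] Cq]].
      assert (j0 = n).
      { destruct (Nat.eq_dec j0 n); auto. exfalso; apply H. exists (Q j0); split; auto.
        exists j0; split; auto; lia. }
      subst j0. exists (Q n). split; [exists n; split; auto|]. split; auto.
      intros q' [j [Hj ->]] Cq'. destruct (Nat.eq_dec j n) as [->|Ne]; [lra|].
      exfalso; apply H. exists (Q j); split; auto. exists j; split; auto; lia.
Qed.

Lemma map_NoDup_inj (f : nat -> pt) n :
  (forall k k', (k < n)%nat -> (k' < n)%nat -> f k = f k' -> k = k') ->
  NoDup (map f (seq 0 n)).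
Proof.
  intros H. apply NoDup_map_NoDup_ForallPairs; [|apply seq_NoDup].
  intros x y Hx Hy E. apply in_seq in Hx, Hy. apply H; auto; lia.
Qed.

Lemma mirror_axis_unique n Q c1 c2 : (0 < n)%nat -> mirror_symmetric (positions n Q) c1 ->
  mirror_symmetric (positions n Q) c2 -> c1 = c2.
Proof.
  intros Hn H1 H2.
  destruct (ex_argmax fst n Q Hn) as [j [Hj Hmx]].
  destruct (ex_argmax (fun q => - fst q) n Q Hn) as [k [Hk Hmn]].
  assert (M1 : positions n Q (mirror c1 (Q j))) by (apply H1; exists j; auto).
  assert (M2 : positions n Q (mirror c2 (Q k))) by (apply H2; exists k; auto).
  assert (M3 : positions n Q (mirror c1 (Q k))) by (apply H1; exists k; auto).
  assert (M4 : positions n Q (mirror c2 (Q j))) by (apply H2; exists j; auto).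
  destruct M1 as [i1 [Hi1 E1]], M2 as [i2 [Hi2 E2]], M3 as [i3 [Hi3 E3]], M4 as [i4 [Hi4 E4]].
  pose proof (Hmn i1 Hi1); pose proof (Hmx i3 Hi3); pose proof (Hmn i4 Hi4);
    pose proof (Hmx i2 Hi2).
  rewrite <- E1 in *; rewrite <- E2 in *; rewrite <- E3 in *; rewrite <- E4 in *.
  unfold mirror in *; simpl in *. lra.
Qed.

Lemma dist2_sym p q : dist2 p q = dist2 q p.
Proof. unfold dist2; ring. Qed.

Definition well_spaced (S : pt -> Prop) := (forall p q, S p -> S q -> p <> q -> 4 <= dist2 p q) /\
  (forall c1 c2, mirror_symmetric S c1 -> mirror_symmetric S c2 -> c1 = c2).

Lemma well_spaced_positions n Q : (0 < n)%nat -> no_overlap n Q -> well_spaced (positions n Q).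
Proof.
  intros Hn H. split.
  - intros p q Hp Hq Hne. apply (no_overlap_dist2 n Q); auto.
  - intros c1 c2 H1 H2. apply (mirror_axis_unique n Q); auto.
Qed.

Lemma mirror_ne_x c M : M <> mirror c M -> fst M <> c.
Proof. intros H E. apply H. unfold mirror. destruct M; simpl in *; apply pt_eq; simpl; lra. Qed.

Lemma mirror_far S c M : well_spaced S -> mirror_symmetric S c -> S M -> M <> mirror c M ->
  1 <= Rabs (fst M - c).
Proof.
  intros [H4 _] Hs HM Hne. pose proof (H4 M (mirror c M) HM (Hs M HM) Hne) as H.
  unfold dist2, mirror in H; simpl in H.
  replace (fst M - (2 * c - fst M)) with (2 * (fst M - c)) in H by ring.
  replace (snd M - snd M) with 0 in H by ring.
  destruct (Rle_dec 0 (fst M - c)); [rewrite Rabs_right by lra|rewrite Rabs_left by lra]; nra.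
Qed.

Definition finite_le n (S : pt -> Prop) :=
  (forall C : pt -> Prop, exists l, NoDup l /\ forall q, In q l <-> (S q /\ C q)) /\
  (forall l, NoDup l -> (forall q, In q l -> S q) -> (length l <= n)%nat).

Lemma finite_le_positions n Q : no_overlap n Q -> finite_le n (positions n Q).
Proof.
  intros H. split.
  - intros C. apply positions_filter_list. intros i j Hi Hj E. apply (no_overlap_inj n Q); auto.
  - intros l Hl Hin. apply (positions_count_le n Q); auto.
Qed.

Definition pt_eq_dec (p q : pt) : {p = q} + {p <> q}.
Proof. destruct (excluded_middle_informative (p = q)); auto. Defined.

Lemma len_remove1 (l' l : list pt) M : NoDup l' -> (forall q, In q l' -> In q l /\ q <> M) ->
  In M l ->
  (length l' < length l)%nat.
Proof.
  intros Hn Hi HM. pose proof (remove_length_lt pt_eq_dec l M HM).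
  assert (length l' <= length (remove pt_eq_dec M l))%nat; [|lia].
  apply NoDup_incl_length; auto. intros q Hq. destruct (Hi q Hq). apply in_in_remove; auto.
Qed.

Lemma len_remove2 (l' l : list pt) M M2 : NoDup l' ->
  (forall q, In q l' -> In q l /\ q <> M /\ q <> M2) -> In M l -> In M2 l -> M <> M2 ->
  (length l' + 2 <= length l)%nat.
Proof.
  intros Hn Hi HM HM2 Hne.
  pose proof (remove_length_lt pt_eq_dec l M HM).
  assert (In M2 (remove pt_eq_dec M l)) by (apply in_in_remove; auto).
  pose proof (remove_length_lt pt_eq_dec _ M2 H0).
  assert (length l' <= length (remove pt_eq_dec M2 (remove pt_eq_dec M l)))%nat; [|lia].
  apply NoDup_incl_length; auto. intros q Hq. destruct (Hi q Hq) as [A [B C]].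
  apply in_in_remove; auto. apply in_in_remove; auto.
Qed.

Lemma len_replace1 (l' l : list pt) M D : NoDup l' ->
  (forall q, In q l' -> q = D \/ (In q l /\ q <> M)) ->
  In M l -> (length l' <= length l)%nat.
Proof.
  intros Hn Hi HM. pose proof (remove_length_lt pt_eq_dec l M HM).
  assert (length l' <= length (D :: remove pt_eq_dec M l))%nat; [|simpl in *; lia].
  apply NoDup_incl_length; auto. intros q Hq. destruct (Hi q Hq) as [->|[A B]]; [left; auto|right].
  apply in_in_remove; auto.
Qed.

Lemma len_replace2 (l' l : list pt) M M2 D D2 : NoDup l' ->
  (forall q, In q l' -> q = D \/ q = D2 \/ (In q l /\ q <> M /\ q <> M2)) ->
  In M l -> In M2 l -> M <> M2 -> (length l' <= length l)%nat.
Proof.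
  intros Hn Hi HM HM2 Hne.
  pose proof (remove_length_lt pt_eq_dec l M HM).
  assert (In M2 (remove pt_eq_dec M l)) by (apply in_in_remove; auto).
  pose proof (remove_length_lt pt_eq_dec _ M2 H0).
  assert (length l' <= length (D :: D2 :: remove pt_eq_dec M2 (remove pt_eq_dec M l)))%nat;
    [|simpl in *; lia].
  apply NoDup_incl_length; auto. intros q Hq.
    destruct (Hi q Hq) as [->|[->|[A [B C]]]]; [left; auto|right; left; auto|].
  right; right. apply in_in_remove; auto. apply in_in_remove; auto.
Qed.

Definition replace1 (S : pt -> Prop) M D : pt -> Prop := fun q => q = D \/ (S q /\ q <> M).

Definition replace2 (S : pt -> Prop) M D c : pt -> Prop :=
  fun q => q = D \/ q = mirror c D \/ (S q /\ q <> M /\ q <> mirror c M).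

Lemma mirror_symmetric_replace2 S M D c : mirror_symmetric S c ->
  mirror_symmetric (replace2 S M D c) c.
Proof.
  intros Hs q [->|[->|[Hq [H1 H2]]]]; unfold replace2.
  - right; left; auto.
  - left; apply mirror_involutive.
  - right; right. split; [apply Hs; auto|]. split.
    + intro E. apply H2. rewrite <- E, mirror_involutive; auto.
    + intro E. apply H1. rewrite <- (mirror_involutive c q), E, mirror_involutive; auto.
Qed.

Lemma iso_img_mirror_replace1 S c M D : mirror_symmetric S c ->
  iso_img (mirror_iso c) (replace1 S M D) = replace1 S (mirror c M) (mirror c D).
Proof.
  intros Hs. apply set_ext; intro q. unfold iso_img. rewrite iso_inv_mirror, iso_app_mirror.
    unfold replace1. split.
  - intros [E|[Hq Hne]].
    + left. rewrite <- E, mirror_involutive; auto.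
    + right. split; [rewrite <- (mirror_involutive c q); apply Hs; auto|]. intro E; apply Hne.
      rewrite E, mirror_involutive; auto.
  - intros [E|[Hq Hne]].
    + left. rewrite E, mirror_involutive; auto.
    + right. split; [apply Hs; auto|]. intro E; apply Hne. rewrite <- E, mirror_involutive; auto.
Qed.

Lemma positions_replace1 n Q Q' i0 M D : no_overlap n Q -> (i0 < n)%nat -> Q i0 = M -> Q' i0 = D ->
  (forall j, (j < n)%nat -> j <> i0 -> Q' j = Q j) -> positions n Q' = replace1 (positions n Q) M D.
Proof.
  intros Hno Hi0 HM HD Hfix. apply set_ext; intro q. unfold positions, replace1. split.
  - intros [j [Hj ->]]. destruct (Nat.eq_dec j i0) as [->|Ne]; [left; auto|right].
    rewrite Hfix by auto. split; [exists j; auto|]. intro E. rewrite <- HM in E.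
    apply (no_overlap_inj n Q) in E; auto.
  - intros [->|[[j [Hj ->]] Hne]]; [exists i0; auto|].
    exists j. split; auto. destruct (Nat.eq_dec j i0) as [->|Ne]; [exfalso; auto|].
      rewrite Hfix; auto.
Qed.

Lemma positions_replace2 n Q Q' i0 i1 M D c : no_overlap n Q -> (i0 < n)%nat -> (i1 < n)%nat ->
  i0 <> i1 ->
  Q i0 = M -> Q i1 = mirror c M -> Q' i0 = D -> Q' i1 = mirror c D ->
  (forall j, (j < n)%nat -> j <> i0 -> j <> i1 -> Q' j = Q j) ->
    positions n Q' = replace2 (positions n Q) M D c.
Proof.
  intros Hno Hi0 Hi1 Hne01 HM HsM HD HsD Hfix. apply set_ext; intro q. unfold positions, replace2.
    split.
  - intros [j [Hj ->]]. destruct (Nat.eq_dec j i0) as [->|N0]; [left; auto|].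
    destruct (Nat.eq_dec j i1) as [->|N1]; [right; left; auto|]. right; right.
    rewrite Hfix by auto. split; [exists j; auto|]. split; intro E.
    + rewrite <- HM in E. apply (no_overlap_inj n Q) in E; auto.
    + rewrite <- HsM in E. apply (no_overlap_inj n Q) in E; auto.
  - intros [->|[->|[[j [Hj ->]] [Hn0 Hn1]]]]; [exists i0; auto|exists i1; auto|].
    exists j. split; auto. destruct (Nat.eq_dec j i0) as [->|N0]; [exfalso; auto|].
    destruct (Nat.eq_dec j i1) as [->|N1]; [exfalso; auto|]. rewrite Hfix; auto.
Qed.


(** * The ranking *)

(* The extra 3 keeps distinct slots at least 6 apart ([slot_chord36]), which keeps the moves
   into the slots clear of the occupied ones. *)
Definition min_side (a : R) : R := a + 3.

Definition top1_radius n a : R := min_side a / (2 * sin (PI / INR n)).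

(* The polygons of side [min_side a] with apex [T], and with top side [A B]. *)
Definition ngon_of_top1 n a (T : pt) : ngon :=
  mkNgon (fst T) (snd T - top1_radius n a) (top1_radius n a) 0.

Definition top2_radius n (A B : pt) : R := Rabs (fst A - fst B) / (2 * sin (PI / INR n)).

Definition ngon_of_top2 n (A B : pt) : ngon :=
  mkNgon ((fst A + fst B) / 2) (snd A - top2_radius n A B * cos (PI / INR n))
    (top2_radius n A B) 1.

Definition sgn (x : R) : R := if Rle_dec 0 x then 1 else -1.

Definition top1 (S : pt -> Prop) T := S T /\ (forall q, S q -> snd q <= snd T) /\
  (forall q, S q -> snd q = snd T -> q = T).

Definition top2 (S : pt -> Prop) A B := S A /\ S B /\ A <> B /\ snd A = snd B /\
  (forall q, S q -> snd q <= snd A) /\ (forall q, S q -> snd q = snd A -> q = A \/ q = B).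

Definition top3 (S : pt -> Prop) := exists q1 q2 q3, S q1 /\ S q2 /\ S q3 /\
  q1 <> q2 /\ q1 <> q3 /\ q2 <> q3 /\ snd q1 = snd q2 /\ snd q1 = snd q3 /\
  (forall q, S q -> snd q <= snd q1).

Definition crowd n (S : pt -> Prop) pd q := S q /\ ~ slot n pd q.

Definition crowd_leader n (S : pt -> Prop) pd M := crowd n S pd M /\
  (forall q, crowd n S pd q -> snd q <= snd M) /\
  (forall q, crowd n S pd q -> snd M - 2 < snd q ->
     q = M \/ exists c, mirror_symmetric S c /\ q = mirror c M).

Definition crowd_separated n S pd :=
  (forall q, ~ crowd n S pd q) \/ exists M, crowd_leader n S pd M.

(* Keeps the crowd so far below the polygon that the segment from any crowd robot to any slot
   rises at least as much as it moves sideways ([fill_steep]). *)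
Definition crowd_gap (pd : ngon) (W : R) : R := W + 3 * ngon_r pd + 10.

Definition anchored n a (S : pt -> Prop) pd y :=
  (exists T, top1 S T /\ pd = ngon_of_top1 n a T /\ y = snd T) \/
  (exists A B, top2 S A B /\ min_side a <= Rabs (fst A - fst B) /\
     pd = ngon_of_top2 n A B /\ y = snd A).

Set Implicit Arguments.
Record good_ngon n a (S : pt -> Prop) (pd : ngon) (y W : R) : Prop := {
  good_anchored : anchored n a S pd y;
  good_width_nonneg : 0 <= W;
  good_filled_top_down : forall w v, slot n pd w -> slot n pd v -> S w -> ~ S v -> snd v <= snd w;
  good_crowd_low : forall q, crowd n S pd q ->
    Rabs (fst q - ngon_cx pd) <= W /\ snd q <= y - crowd_gap pd W + 2;
  good_crowd_high_separated :
    (exists q, crowd n S pd q /\ y - crowd_gap pd W < snd q) -> crowd_separated n S pd }.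
Unset Implicit Arguments.

Definition crowd_list n S pd (l : list pt) := NoDup l /\ forall q, In q l <-> crowd n S pd q.

(* The ranks above [2 n + 1] are the phases that produce a good polygon; below, twice the
   size of the crowd, plus one while it is not separated. *)
Definition has_rank n a (S : pt -> Prop) (m : nat) : Prop :=
  (top3 S /\ m = (2 * n + 6)%nat) \/
  (exists A B, top2 S A B /\ Rabs (fst A - fst B) < min_side a /\ m = (2 * n + 5)%nat) \/
  (exists A B, top2 S A B /\ Rabs (fst A - fst B) < min_side a /\
     (forall q, S q -> q <> A -> q <> B -> snd q <= snd A - 2) /\ m = (2 * n + 4)%nat) \/
  (exists A B, top2 S A B /\ min_side a <= Rabs (fst A - fst B) /\ m = (2 * n + 3)%nat) \/
  (exists T, top1 S T /\ m = (2 * n + 2)%nat) \/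
  (exists pd y W l b, good_ngon n a S pd y W /\ crowd_list n S pd l /\ (b = 0 \/ b = 1)%nat /\
     (b = 0%nat -> crowd_separated n S pd) /\ m = (2 * length l + b)%nat).

(* A topmost robot climbs by 2 when it is not alone on the top line, a topmost pair that is
   already isolated is pushed apart, and a single topmost robot (or a wide pair) climbs so high
   that it anchors a good polygon. Then the top crowd robot climbs to 2 above the next one, and
   the leader of a separated crowd goes to the highest free slot on its own side of the axis. *)
Definition move_spec n a (S : pt -> Prop) (m : nat) (M D : pt) : Prop :=
  (top3 S /\ m = (2 * n + 6)%nat /\ S M /\ (forall q, S q -> snd q <= snd M) /\
     D = (fst M, snd M + 2)) \/
  (exists A B, top2 S A B /\ Rabs (fst A - fst B) < min_side a /\ m = (2 * n + 5)%nat /\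
     M = A /\ D = (fst M, snd M + 2)) \/
  (exists A B, top2 S A B /\ Rabs (fst A - fst B) < min_side a /\
     (forall q, S q -> q <> A -> q <> B -> snd q <= snd A - 2) /\ m = (2 * n + 4)%nat /\
     M = A /\ D = (fst A + min_side a * sgn (fst A - fst B), snd A)) \/
  (exists A B W Y, top2 S A B /\ min_side a <= Rabs (fst A - fst B) /\ m = (2 * n + 3)%nat /\
     M = A /\ D = (fst A, Y) /\ snd A < Y /\ 0 <= W /\
     forall q, S q -> q <> A -> q <> B ->
       Rabs (fst q - ngon_cx (ngon_of_top2 n A B)) <= W /\
       snd q + crowd_gap (ngon_of_top2 n A B) W + 2 <= Y) \/
  (exists T W Y, top1 S T /\ m = (2 * n + 2)%nat /\ M = T /\ D = (fst T, Y) /\ snd T < Y /\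
     0 <= W /\
     forall q, S q -> q <> T ->
       Rabs (fst q - fst T) <= W /\ snd q + crowd_gap (ngon_of_top1 n a T) W + 2 <= Y) \/
  (exists pd y W l, good_ngon n a S pd y W /\ crowd_list n S pd l /\
     ((m = (2 * length l + 1)%nat /\ ~ crowd_separated n S pd /\ crowd n S pd M /\
        (forall q, crowd n S pd q -> snd q <= snd M) /\
        exists q0, crowd n S pd q0 /\ q0 <> M /\
          (forall q, crowd n S pd q -> q <> M -> snd q <= snd q0) /\ D = (fst M, snd q0 + 2)) \/
      (m = (2 * length l)%nat /\ l <> nil /\ crowd_leader n S pd M /\ slot n pd D /\ ~ S D /\
        (forall v, slot n pd v -> ~ S v -> snd v <= snd D) /\
        (forall c, mirror_symmetric S c -> M <> mirror c M -> 0 < (fst D - c) * (fst M - c))) \/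
      (m = 0%nat /\ l = nil /\ S M /\ D = M))).

Lemma move_spec_mover_mem n a S m M D : move_spec n a S m M D -> S M.
Proof.
  intros [C|[C|[C|[C|[C|C]]]]].
  - destruct C as [_ [_ [HM _]]]; auto.
  - destruct C as [A [B [[HA _] [_ [_ [-> _]]]]]]; auto.
  - destruct C as [A [B [[HA _] [_ [_ [_ [-> _]]]]]]]; auto.
  - destruct C as [A [B [W [Y [[HA _] [_ [_ [-> _]]]]]]]]; auto.
  - destruct C as [T [W [Y [[HT _] [_ [-> _]]]]]]; auto.
  - destruct C as [pd [y [W [l [HG [HL [C|[C|C]]]]]]]].
    + destruct C as [_ [_ [[HM _] _]]]; auto.
    + destruct C as [_ [_ [[[HM _] _] _]]]; auto.
    + destruct C as [_ [_ [HM _]]]; auto.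
Qed.

Lemma min_side_gt6 a : 3 < a -> 6 < min_side a.
Proof. unfold min_side; lra. Qed.

Lemma top1_radius_pos n a : (1 < n)%nat -> 3 < a -> 0 < top1_radius n a.
Proof.
  intros. unfold top1_radius. pose proof (sin_pi_n_pos n H). pose proof (min_side_gt6 a H0).
  apply Rdiv_lt_0_compat; lra.
Qed.

Lemma top2_radius_pos n A B : (1 < n)%nat -> fst A <> fst B -> 0 < top2_radius n A B.
Proof.
  intros. unfold top2_radius. pose proof (sin_pi_n_pos n H). apply Rdiv_lt_0_compat; [|lra].
  apply Rabs_pos_lt. lra.
Qed.

Lemma cos_pi_n_le1 n : cos (PI / INR n) <= 1.
Proof. pose proof (COS_bound (PI / INR n)); lra. Qed.


(** * Polygons anchored at the top *)

Lemma ngon_pt_0 n pd : ngon_pt n pd 0 = (ngon_cx pd, ngon_cy pd + ngon_r pd).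
Proof. unfold ngon_pt. rewrite ang_0, sin_0, cos_0. apply pt_eq; simpl; ring. Qed.

Lemma ngon_of_top1_pt0 n a T : ngon_pt n (ngon_of_top1 n a T) 0 = T.
Proof. rewrite ngon_pt_0. unfold ngon_of_top1; simpl. destruct T; apply pt_eq; simpl; ring. Qed.

Lemma ngon_of_top2_pt n A B : (1 < n)%nat -> snd A = snd B ->
  ngon_pt n (ngon_of_top2 n A B) 1 = (Rmax (fst A) (fst B), snd A)
    /\ ngon_pt n (ngon_of_top2 n A B) (-1) = (Rmin (fst A) (fst B), snd A).
Proof.
  intros Hn Hy. pose proof (sin_pi_n_pos n Hn) as Hs.
  assert (E : top2_radius n A B * sin (PI / INR n) = Rabs (fst A - fst B) / 2).
  { unfold top2_radius in *. field. lra. }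
  unfold ngon_pt, ngon_of_top2; simpl. rewrite ang_1.
  replace (ang n (-1)) with (- (PI / INR n)) by (unfold ang; simpl; unfold Rdiv; ring).
  rewrite sin_neg, cos_neg. split; apply pt_eq; simpl; try ring;
  unfold Rmax, Rmin; destruct (Rle_dec (fst A) (fst B)).
  - rewrite E, Rabs_left1 by lra. field.
  - rewrite E, Rabs_right by lra. field.
  - rewrite Ropp_mult_distr_r_reverse, E, Rabs_left1 by lra. field.
  - rewrite Ropp_mult_distr_r_reverse, E, Rabs_right by lra. field.
Qed.

Lemma ngon_of_top2_anchor n A B : (1 < n)%nat -> snd A = snd B ->
  (ngon_pt n (ngon_of_top2 n A B) 1 = A /\ ngon_pt n (ngon_of_top2 n A B) (-1) = B) \/
  (ngon_pt n (ngon_of_top2 n A B) 1 = B /\ ngon_pt n (ngon_of_top2 n A B) (-1) = A).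
Proof.
  intros Hn Hy. destruct (ngon_of_top2_pt n A B Hn Hy) as [E1 E2]. rewrite E1, E2.
  unfold Rmax, Rmin. destruct (Rle_dec (fst A) (fst B)); [right|left]; split;
  destruct A, B; simpl in *; apply pt_eq; simpl; auto.
Qed.

Lemma ngon_pt_n_height n pd : (1 < n)%nat ->
  snd (ngon_pt n pd (Z.of_nat n)) = ngon_cy pd - ngon_r pd.
Proof. intro Hn. unfold ngon_pt; simpl. rewrite ang_n, cos_PI by auto. ring. Qed.

Set Implicit Arguments.
Record ngon_facts n a (S : pt -> Prop) (pd : ngon) (y : R) : Prop := {
  ngon_r_pos : 0 < ngon_r pd;
  ngon_side_ge : min_side a <= 2 * ngon_r pd * sin (PI / INR n);
  slots_below_top : forall v, slot n pd v -> snd v <= y;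
  top_slots_occupied : forall v, slot n pd v -> snd v < y \/ S v;
  top_robots_on_slots : forall q, S q -> snd q = y -> slot n pd q;
  slots_above_bottom : forall v, slot n pd v -> y - 2 * ngon_r pd <= snd v;
  slots_x_bound : forall v, slot n pd v -> Rabs (fst v - ngon_cx pd) <= ngon_r pd;
  free_axis_slot_bottom : forall v, slot n pd v -> ~ S v -> fst v = ngon_cx pd ->
    v = ngon_pt n pd (Z.of_nat n);
  mirror_axis_center : forall c, mirror_symmetric S c -> c = ngon_cx pd }.
Unset Implicit Arguments.

Lemma top2_x_neq S A B : top2 S A B -> fst A <> fst B.
Proof. intros [_ [_ [Hne [Hy _]]]] E. apply Hne. apply pt_eq; auto. Qed.

Lemma top1_facts n a S T : (1 < n)%nat -> 3 < a -> top1 S T ->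
  ngon_facts n a S (ngon_of_top1 n a T) (snd T).
Proof.
  intros Hn Ha [HT [Htop Huni]].
  pose proof (sin_pi_n_pos n Hn) as Hs. pose proof (top1_radius_pos n a Hn Ha) as Hr.
  set (pd := ngon_of_top1 n a T).
  assert (Hpr : ngon_r pd = top1_radius n a) by reflexivity.
  assert (Hpe : ngon_parity pd = 0%Z) by reflexivity.
  assert (Hslot_top : forall v, slot n pd v -> snd v < snd T \/ v = T).
  { intros v Hv.
    assert (Hapex : ngon_cy pd + ngon_r pd * cos (ang n (ngon_parity pd)) = snd T).
    { rewrite Hpe, ang_0, cos_0. unfold pd, ngon_of_top1; simpl. ring. }
    destruct (slot_height n pd v Hn ltac:(rewrite Hpr; lra) ltac:(rewrite Hpe; auto) Hv) as
      [H|[H|H]];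
      [left; rewrite <- Hapex; auto|right|right];
      rewrite H, Hpe; try rewrite Z.opp_0; apply ngon_of_top1_pt0. }
  split.
  - rewrite Hpr; auto.
  - rewrite Hpr. unfold top1_radius. right. field. lra.
  - intros v Hv. destruct (Hslot_top v Hv) as [H| ->]; lra.
  - intros v Hv. destruct (Hslot_top v Hv) as [H| ->]; [left|right]; auto.
  - intros q Hq Hqy. rewrite (Huni q Hq Hqy). exists 0%Z. split.
    + exists 0%Z; simpl; lia.
    + symmetry; apply ngon_of_top1_pt0.
  - intros v Hv. destruct (slot_bounds n pd v ltac:(rewrite Hpr; lra) Hv) as [_ H].
    unfold pd, ngon_of_top1 in H |- *; simpl in H |- *. lra.
  - intros v Hv. apply (slot_bounds n pd v ltac:(rewrite Hpr; lra) Hv).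
  - intros v Hv HnS Hx. destruct (slot_axis n pd v Hn ltac:(rewrite Hpr; lra) Hv Hx) as [E|E]; auto.
    exfalso. rewrite E in HnS. apply HnS. unfold pd. rewrite ngon_of_top1_pt0. auto.
  - intros c Hc. pose proof (Huni _ (Hc T HT) eq_refl) as E.
    unfold mirror in E. unfold pd, ngon_of_top1; simpl.
      destruct T; injection E; intros; simpl in *; lra.
Qed.

Lemma ngon_of_top2_slot_below n A B v : (1 < n)%nat -> snd A = snd B -> fst A <> fst B ->
  slot n (ngon_of_top2 n A B) v -> snd v < snd A \/ v = A \/ v = B.
Proof.
  intros Hn Hy Hx Hv. set (pd := ngon_of_top2 n A B) in *.
  pose proof (top2_radius_pos n A B Hn Hx) as Hr.
  assert (Hedge : ngon_cy pd + ngon_r pd * cos (ang n (ngon_parity pd)) = snd A).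
  { unfold pd, ngon_of_top2; simpl. rewrite ang_1. ring. }
  destruct (slot_height n pd v Hn Hr ltac:(right; auto) Hv) as [H|[H|H]];
    [left; rewrite <- Hedge; auto| |]; right; rewrite H;
    destruct (ngon_of_top2_anchor n A B Hn Hy) as [[E1 E2]|[E1 E2]]; rewrite ?E1, ?E2; auto.
Qed.

Lemma ngon_of_top2_slot_ends n A B : (1 < n)%nat -> snd A = snd B ->
  slot n (ngon_of_top2 n A B) A /\ slot n (ngon_of_top2 n A B) B.
Proof.
  intros Hn Hy. set (pd := ngon_of_top2 n A B).
  assert (S1 : slot n pd (ngon_pt n pd 1)) by (exists 1%Z; split; auto; exists 0%Z; simpl; lia).
  assert (S2 : slot n pd (ngon_pt n pd (-1)))
    by (exists (-1)%Z; split; auto; exists (-1)%Z; simpl; lia).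
  destruct (ngon_of_top2_anchor n A B Hn Hy) as [[E1 E2]|[E1 E2]]; fold pd in E1, E2;
    rewrite E1, E2 in *; auto.
Qed.

Lemma top2_facts n a S A B : (1 < n)%nat -> 3 < a -> top2 S A B ->
  min_side a <= Rabs (fst A - fst B) -> ngon_facts n a S (ngon_of_top2 n A B) (snd A).
Proof.
  intros Hn Ha HA2 Hd. pose proof HA2 as [HAS [HBS [Hne [Hy [Htop Huni]]]]].
  pose proof (sin_pi_n_pos n Hn) as Hs. pose proof (top2_x_neq S A B HA2) as Hx.
  pose proof (top2_radius_pos n A B Hn Hx) as Hr.
  pose proof (ngon_of_top2_slot_below n A B) as Hbelow.
  pose proof (ngon_of_top2_slot_ends n A B Hn Hy) as Hends.
  set (pd := ngon_of_top2 n A B) in *.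
  assert (Hpr : ngon_r pd = top2_radius n A B) by reflexivity.
  split.
  - rewrite Hpr; auto.
  - rewrite Hpr. unfold top2_radius.
    replace (2 * (Rabs (fst A - fst B) / (2 * sin (PI / INR n))) * sin (PI / INR n))
      with (Rabs (fst A - fst B)) by (field; lra). auto.
  - intros v Hv. destruct (Hbelow v Hn Hy Hx Hv) as [H|[->| ->]]; lra.
  - intros v Hv. destruct (Hbelow v Hn Hy Hx Hv) as [H|[->| ->]]; [left|right|right]; auto.
  - intros q Hq Hqy. destruct (Huni q Hq Hqy) as [->| ->]; apply Hends.
  - intros v Hv. destruct (slot_bounds n pd v ltac:(rewrite Hpr; lra) Hv) as [_ H].
    unfold pd, ngon_of_top2 in H |- *; simpl in H |- *. pose proof (cos_pi_n_le1 n).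
    assert (top2_radius n A B * cos (PI / INR n) <= top2_radius n A B) by nra. lra.
  - intros v Hv. apply (slot_bounds n pd v ltac:(rewrite Hpr; lra) Hv).
  - intros v Hv HnS Hxv.
    destruct (slot_axis n pd v Hn ltac:(rewrite Hpr; lra) Hv Hxv) as [E|E]; auto.
    exfalso. destruct (Hbelow v Hn Hy Hx Hv) as [H|[->| ->]]; auto.
    rewrite E, ngon_pt_0 in H. unfold pd, ngon_of_top2 in H; simpl in H.
    pose proof (cos_pi_n_le1 n). nra.
  - intros c Hc. pose proof (Hc A HAS) as HcA. pose proof (Hc B HBS) as HcB.
    destruct (Huni _ HcA eq_refl) as [E|E]; unfold mirror in E;
    destruct (Huni _ HcB ltac:(simpl; auto)) as [E'|E']; unfold mirror in E';
    unfold pd, ngon_of_top2; simpl; destruct A as [xa ya], B as [xb yb]; simpl in *;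
    injection E; injection E'; intros; subst; try lra; exfalso; apply Hne; f_equal; lra.
Qed.

Lemma anchored_facts n a S pd y : (1 < n)%nat -> 3 < a -> anchored n a S pd y ->
  ngon_facts n a S pd y.
Proof.
  intros Hn Ha [[T [HT [-> ->]]]|[A [B [HA2 [Hd [-> ->]]]]]].
  - apply top1_facts; auto.
  - apply top2_facts; auto.
Qed.

Lemma good_ngon_facts n a S pd y W : (1 < n)%nat -> 3 < a -> good_ngon n a S pd y W ->
  ngon_facts n a S pd y.
Proof. intros Hn Ha [HA _ _ _ _]. apply anchored_facts; auto. Qed.

Lemma anchored_mono n a (S S' : pt -> Prop) pd y : anchored n a S pd y ->
  (forall q, S q -> snd q = y -> S' q) -> (forall q, S' q -> S q \/ snd q < y) ->
    anchored n a S' pd y.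
Proof.
  intros [[T [[HT [Htop Huni]] [-> ->]]]|
          [A [B [[HA [HB [Hne [Hy [Htop Huni]]]]] [Hd [-> ->]]]]]] Hk Hn.
  - left. exists T. split; auto. split; [apply Hk; auto|]. split.
    + intros q Hq. destruct (Hn q Hq); [apply Htop; auto|lra].
    + intros q Hq Hqy. destruct (Hn q Hq); [apply Huni; auto|lra].
  - right. exists A, B. split; auto. split; [apply Hk; auto|]. split; [apply Hk; auto; lra|].
    split; auto. split; auto. split.
    + intros q Hq. destruct (Hn q Hq); [apply Htop; auto|lra].
    + intros q Hq Hqy. destruct (Hn q Hq); [apply Huni; auto|lra].
Qed.

Lemma slot_chord36 n a S pd y p q : (1 < n)%nat -> 3 < a -> ngon_facts n a S pd y ->
  slot n pd p -> slot n pd q -> p <> q -> 36 <= dist2 p q.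
Proof.
  intros Hn Ha Hfacts Hp Hq Hne.
  pose proof (ngon_r_pos Hfacts). pose proof (ngon_side_ge Hfacts) as Hside.
  pose proof (slot_chord n pd p q Hn Hp Hq Hne). pose proof (min_side_gt6 a Ha).
  assert (0 <= 2 * ngon_r pd * sin (PI / INR n)) by lra.
  assert ((2 * ngon_r pd * sin (PI / INR n))^2 >= min_side a ^ 2) by nra. nra.
Qed.

Lemma crowd_below_top n a S pd y W q : (1 < n)%nat -> 3 < a -> good_ngon n a S pd y W ->
  crowd n S pd q -> snd q < y.
Proof.
  intros Hn Ha HG Hq. destruct (good_crowd_low HG Hq) as [_ H].
  pose proof (ngon_r_pos (good_ngon_facts n a S pd y W Hn Ha HG)).
  pose proof (good_width_nonneg HG). unfold crowd_gap in H. lra.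
Qed.

Lemma crowd_mirror n a S pd y W c q : (1 < n)%nat -> 3 < a -> good_ngon n a S pd y W ->
  mirror_symmetric S c -> crowd n S pd q -> crowd n S pd (mirror c q).
Proof.
  intros Hn Ha HG Hs [Hq Hns]. split; [apply Hs; auto|].
  rewrite (mirror_axis_center (good_ngon_facts n a S pd y W Hn Ha HG) Hs).
  intro H. apply Hns. rewrite <- (mirror_involutive (ngon_cx pd) q). apply slot_mirror; auto.
Qed.

Lemma not_separated_crowd_low n a S pd y W : good_ngon n a S pd y W -> ~ crowd_separated n S pd ->
  forall q, crowd n S pd q -> snd q <= y - crowd_gap pd W.
Proof. intros [_ _ _ _ HJ] HnS q Hq. apply Rnot_lt_le. intro. apply HnS, HJ. eauto. Qed.

Lemma not_separated_gap n S pd (M q0 : pt) : ~ crowd_separated n S pd -> crowd n S pd M ->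
  (forall q, crowd n S pd q -> snd q <= snd M) ->
  (forall q, crowd n S pd q -> q <> M -> snd q <= snd q0) -> snd M - 2 < snd q0.
Proof.
  intros HnS HM Hmax Hq0. apply Rnot_le_lt. intro Hle. apply HnS. right. exists M.
  split; auto. split; auto. intros q Hq Hgt. left. destruct (classic (q = M)) as [|Hne]; auto.
  specialize (Hq0 q Hq Hne). lra.
Qed.


(** * Collision freedom *)

Lemma interp_fst p q t : fst (interp p q t) = fst p + t * (fst q - fst p).
Proof. reflexivity. Qed.

Lemma interp_snd p q t : snd (interp p q t) = snd p + t * (snd q - snd p).
Proof. reflexivity. Qed.

Lemma interp_const p t : interp p p t = p.
Proof. destruct p; unfold interp; simpl; apply pt_eq; simpl; ring. Qed.

Lemma interp_mirror c p q t : interp (mirror c p) (mirror c q) t = mirror c (interp p q t).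
Proof. unfold interp, mirror; simpl. apply pt_eq; simpl; ring. Qed.

Lemma dist2_mirror c z w : dist2 (mirror c z) w = dist2 z (mirror c w).
Proof. unfold dist2, mirror; simpl. ring. Qed.

Lemma dist2_self_mirror c z : dist2 z (mirror c z) = (2 * (fst z - c))^2.
Proof. unfold dist2, mirror; simpl. ring. Qed.

Lemma sum_sq_ge4_r a b : 2 <= b \/ b <= -2 -> 4 <= a^2 + b^2.
Proof. intros H. pose proof (pow2_ge_0 a). destruct H; nra. Qed.

Lemma sum_sq_ge4_l a b : 2 <= a \/ a <= -2 -> 4 <= a^2 + b^2.
Proof. intros H. pose proof (pow2_ge_0 b). destruct H; nra. Qed.

Lemma dist2_vertical_up M h q t : 0 <= t <= 1 -> 0 <= h -> snd q <= snd M -> 4 <= dist2 M q ->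
  4 <= dist2 (interp M (fst M, snd M + h) t) q.
Proof.
  intros Ht Hh Hq Hd. unfold dist2 in *. rewrite interp_fst, interp_snd; simpl.
  replace (fst M + t * (fst M - fst M) - fst q) with (fst M - fst q) by ring.
  replace (snd M + t * (snd M + h - snd M) - snd q) with ((snd M - snd q) + t * h) by ring.
  assert (0 <= t * h) by (apply Rmult_le_pos; lra).
  assert (0 <= snd M - snd q) by lra.
  assert (((snd M - snd q) + t * h)^2 >= (snd M - snd q)^2) by nra. lra.
Qed.

Lemma dist2_vertical_move M Y q t : 0 <= t <= 1 -> snd M <= Y -> snd q <= snd M -> 4 <= dist2 M q ->
  4 <= dist2 (interp M (fst M, Y) t) q.
Proof.
  intros. replace (fst M, Y) with (fst M, snd M + (Y - snd M)) by (f_equal; ring).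
  apply dist2_vertical_up; auto; lra.
Qed.

Lemma dist2_above_target M D q t : 0 <= t <= 1 -> snd M <= snd D -> snd D + 2 <= snd q ->
  4 <= dist2 (interp M D t) q.
Proof.
  intros Ht H1 H2. unfold dist2. rewrite interp_fst, interp_snd.
  assert (snd M + t * (snd D - snd M) <= snd D) by nra. apply sum_sq_ge4_r; lra.
Qed.

Lemma dist2_below_start M D q t : 0 <= t <= 1 -> snd M <= snd D -> snd q <= snd M - 2 ->
  4 <= dist2 (interp M D t) q.
Proof.
  intros Ht H1 H2. unfold dist2. rewrite interp_fst, interp_snd.
  assert (snd M <= snd M + t * (snd D - snd M)) by nra. apply sum_sq_ge4_r; lra.
Qed.

Lemma dist2_horizontal_away M d q t : 0 <= t <= 1 -> snd q = snd M -> 0 <= d * (fst M - fst q) ->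
  4 <= dist2 M q ->
  4 <= dist2 (interp M (fst M + d, snd M) t) q.
Proof.
  intros Ht Hy Hd H. unfold dist2 in *. rewrite interp_fst, interp_snd; simpl.
  rewrite Hy in *.
  replace (fst M + t * (fst M + d - fst M) - fst q) with ((fst M - fst q) + t * d) by ring.
  assert (0 <= t * (d * (fst M - fst q))) by (apply Rmult_le_pos; lra).
  replace (snd M + t * (snd M - snd M) - snd M) with 0 by ring.
  replace (snd M - snd M) with 0 in H by ring.
  assert (((fst M - fst q) + t * d)^2 >= (fst M - fst q)^2).
  { replace (((fst M - fst q) + t * d)^2) with
    ((fst M - fst q)^2 + 2 * (t * (d * (fst M - fst q))) + (t*d)^2) by ring.
    pose proof (pow2_ge_0 (t*d)). lra. }
  lra.
Qed.

(* The moving point is [D] shifted by [(1 - t) (M - D)], a shift at least as long vertically as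
   horizontally. Either it is 2 below [D], hence below [w], or the shift is less than 2 wide and
   [w], 6 away from [D], is at least 5 away horizontally or at least 2 above [D]. *)
Lemma dist2_steep_move M D w t : 0 <= t <= 1 -> Rabs (fst D - fst M) <= snd D - snd M ->
  snd D <= snd w -> 36 <= dist2 w D -> 4 <= dist2 (interp M D t) w.
Proof.
  destruct M as [mx my], D as [dx dy], w as [wx wy]. unfold dist2, interp; simpl.
  intros Ht Hs Hw Hd.
  set (l := 1 - t).
  set (ux := wx - dx). set (uy := wy - dy).
  set (ex := l * (dx - mx)). set (ey := l * (dy - my)).
  assert (E1 : mx + t * (dx - mx) - wx = - (ux + ex)) by (unfold ux, ex, l; ring).
  assert (E2 : my + t * (dy - my) - wy = - (uy + ey)) by (unfold uy, ey, l; ring).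
  rewrite E1, E2.
  assert (Hl : 0 <= l <= 1) by (unfold l; lra).
  assert (Huy : 0 <= uy) by (unfold uy; lra).
  assert (HH : 0 <= dy - my) by (pose proof (Rabs_pos (dx - mx)); lra).
  assert (Hey : 0 <= ey) by (unfold ey; apply Rmult_le_pos; lra).
  assert (Hex : Rabs ex <= ey) by (unfold ex, ey; rewrite Rabs_mult, Rabs_right by lra;
                                   apply Rmult_le_compat_l; lra).
  assert (Hd' : 36 <= ux^2 + uy^2) by (unfold ux, uy; lra).
  replace ((- (ux + ex))^2) with ((ux + ex)^2) by ring.
  replace ((- (uy + ey))^2) with ((uy + ey)^2) by ring.
  destruct (Rle_dec 2 ey) as [Hb|Hb].
  - apply sum_sq_ge4_r. lra.
  - destruct (Rle_dec 2 uy) as [Hc|Hc].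
    + apply sum_sq_ge4_r. lra.
    + assert (Hux : 32 <= ux^2) by nra.
      assert (Hax : Rabs ex < 2) by lra.
      apply Rabs_def2 in Hax. destruct Hax as [Ha1 Ha2].
      assert (H5 : 5 <= ux \/ ux <= -5).
      { destruct (Rle_dec 5 ux); [left; auto|]. destruct (Rle_dec ux (-5)); [right; auto|].
        exfalso. nra. }
      pose proof (pow2_ge_0 (uy + ey)).
      destruct H5; nra.
Qed.

Lemma sgn_mul_ge0 x : 0 <= sgn x * x.
Proof. unfold sgn; destruct (Rle_dec 0 x); lra. Qed.

Lemma fill_steep n a S pd y W M D : (1 < n)%nat -> 3 < a -> good_ngon n a S pd y W ->
  crowd n S pd M -> slot n pd D ->
  Rabs (fst D - fst M) <= snd D - snd M /\ snd M + 2 <= snd D.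
Proof.
  intros Hn Ha HG HM HD. pose proof (good_ngon_facts n a S pd y W Hn Ha HG) as Hfacts.
  destruct (good_crowd_low HG HM) as [Hx Hy].
  pose proof (ngon_r_pos Hfacts). pose proof (good_width_nonneg HG).
  pose proof (slots_above_bottom Hfacts HD). pose proof (slots_x_bound Hfacts HD).
  unfold crowd_gap in Hy.
  assert (Rabs (fst D - fst M) <= Rabs (fst D - ngon_cx pd) + Rabs (fst M - ngon_cx pd)).
  { replace (fst D - fst M) with ((fst D - ngon_cx pd) + - (fst M - ngon_cx pd)) by ring.
    eapply Rle_trans; [apply Rabs_triang|]. rewrite Rabs_Ropp. lra. }
  split; lra.
Qed.

Lemma fill_same_side n a S pd y W c M D : (1 < n)%nat -> 3 < a -> well_spaced S ->
  good_ngon n a S pd y W -> mirror_symmetric S c ->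
  S M -> M <> mirror c M -> slot n pd D -> 0 < (fst D - c) * (fst M - c) ->
  forall t, 0 <= t <= 1 ->
  (1 <= fst (interp M D t) - c /\ 1 <= fst M - c)
    \/ (fst (interp M D t) - c <= -1 /\ fst M - c <= -1).
Proof.
  intros Hn Ha HC HG Hs HM Hne HD Hpos t Ht.
  pose proof (good_ngon_facts n a S pd y W Hn Ha HG) as Hfacts.
  pose proof (mirror_axis_center Hfacts Hs) as Ec.
  pose proof (mirror_far S c M HC Hs HM Hne) as HMc.
  assert (HDc : 1 <= Rabs (fst D - c)).
  { assert (HsD : slot n pd (mirror c D)) by (rewrite Ec; apply slot_mirror; auto).
    assert (HneD : D <> mirror c D).
    { intro E. assert (fst D = 2 * c - fst D) by (rewrite E at 1; reflexivity). nra. }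
    pose proof (slot_chord36 n a S pd y D (mirror c D) Hn Ha Hfacts HD HsD HneD) as Hch.
    unfold dist2, mirror in Hch; simpl in Hch.
    replace (fst D - (2 * c - fst D)) with (2 * (fst D - c)) in Hch by ring.
    replace (snd D - snd D) with 0 in Hch by ring.
    destruct (Rle_dec 0 (fst D - c)); [rewrite Rabs_right by lra|rewrite Rabs_left by lra]; nra. }
  rewrite interp_fst.
  destruct (Rle_dec 0 (fst M - c)).
  - rewrite Rabs_right in HMc by lra.
    assert (0 < fst D - c) by (destruct (Rle_dec (fst D - c) 0); [nra|lra]).
    rewrite Rabs_right in HDc by lra. left. split; [nra|lra].
  - rewrite Rabs_left in HMc by lra.
    assert (fst D - c < 0) by (destruct (Rle_dec 0 (fst D - c)); [nra|lra]).
    rewrite Rabs_left in HDc by lra. right. split; [nra|lra].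
Qed.

Lemma crowd_lift_clear n a S pd y W M q0 q t : (1 < n)%nat -> 3 < a -> well_spaced S ->
  good_ngon n a S pd y W -> ~ crowd_separated n S pd -> crowd n S pd M ->
  (forall q, crowd n S pd q -> snd q <= snd M) -> crowd n S pd q0 ->
  (forall q, crowd n S pd q -> q <> M -> snd q <= snd q0) ->
  S q -> q <> M -> 0 <= t <= 1 -> 4 <= dist2 (interp M (fst M, snd q0 + 2) t) q.
Proof.
  intros Hn Ha [H4 _] HG HnS HM Hmax Hq0 Hq0m Hq Hne Ht.
  pose proof (good_ngon_facts n a S pd y W Hn Ha HG) as Hfacts.
  pose proof (not_separated_gap n S pd M q0 HnS HM Hmax Hq0m) as Hgap.
  destruct (classic (slot n pd q)) as [Hsq|Hsq].
  - apply dist2_above_target; simpl; auto; try lra.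
    pose proof (not_separated_crowd_low n a S pd y W HG HnS q0 Hq0).
    pose proof (slots_above_bottom Hfacts Hsq). pose proof (ngon_r_pos Hfacts).
    pose proof (good_width_nonneg HG). unfold crowd_gap in *. lra.
  - apply dist2_vertical_move; [auto|simpl; lra|apply Hmax; split; auto|].
    apply H4; [apply HM|auto|auto].
Qed.

(* Occupied slots lie above [D] and at least 6 away from it, so the steep segment keeps clear
   of them; the only other robot less than 2 below [M] is its mirror image, which stays across
   the axis; every other robot is at least 2 below [M]. *)
Lemma fill_clear n a S pd y W M D q t : (1 < n)%nat -> 3 < a -> well_spaced S ->
  good_ngon n a S pd y W -> crowd_leader n S pd M -> slot n pd D -> ~ S D ->
  (forall c, mirror_symmetric S c -> M <> mirror c M -> 0 < (fst D - c) * (fst M - c)) ->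
  S q -> q <> M -> 0 <= t <= 1 -> 4 <= dist2 (interp M D t) q.
Proof.
  intros Hn Ha HC HG [HM [Hmax Habove]] HD HnD Hside Hq Hne Ht.
  pose proof (good_ngon_facts n a S pd y W Hn Ha HG) as Hfacts.
  destruct (fill_steep n a S pd y W M D Hn Ha HG HM HD) as [Hst Hup].
  destruct (classic (slot n pd q)) as [Hsq|Hsq].
  - apply dist2_steep_move; auto.
    + apply (good_filled_top_down HG); auto.
    + apply (slot_chord36 n a S pd y q D Hn Ha Hfacts Hsq HD). intro; subst; auto.
  - destruct (Rlt_dec (snd M - 2) (snd q)) as [Hlt|Hge].
    + destruct (Habove q (conj Hq Hsq) Hlt) as [E|[c [Hs E]]]; [contradiction|].
      subst q. assert (HneM : M <> mirror c M) by (intro E; apply Hne; auto).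
      destruct (fill_same_side n a S pd y W c M D Hn Ha HC HG Hs (proj1 HM) HneM HD
        (Hside c Hs HneM) t Ht) as [[H1 H2]|[H1 H2]];
        unfold dist2, mirror; cbn [fst snd]; apply sum_sq_ge4_l; lra.
    + apply dist2_below_start; auto; lra.
Qed.

Lemma move_clear_of_others n a S m M D : (1 < n)%nat -> 3 < a -> well_spaced S ->
  move_spec n a S m M D ->
  forall q, S q -> q <> M -> forall t, 0 <= t <= 1 -> 4 <= dist2 (interp M D t) q.
Proof.
  intros Hn Ha HC HS q Hq Hne t Ht.
  pose proof HC as [H4 _].
  destruct HS as [C|[C|[C|[C|[C|C]]]]].
  - destruct C as [_ [_ [HM [Htop ->]]]]. apply dist2_vertical_move; auto; lra.
  - destruct C as [A [B [[HA [HB [_ [_ [Htop _]]]]] [_ [_ [-> ->]]]]]].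
    apply dist2_vertical_move; auto; lra.
  - destruct C as [A [B [[HA [HB [HAB [Hy [Htop _]]]]] [_ [Hel [_ [-> ->]]]]]]].
    destruct (classic (q = B)) as [->|HqB].
    + apply dist2_horizontal_away; auto. rewrite Rmult_assoc.
      apply Rmult_le_pos; [pose proof (min_side_gt6 a Ha); lra|apply sgn_mul_ge0].
    + apply dist2_below_start; simpl; auto; lra.
  - destruct C as [A [B [W [Y [[HA [HB [_ [_ [Htop _]]]]] [_ [_ [-> [-> [HY _]]]]]]]]]].
    apply dist2_vertical_move; auto; lra.
  - destruct C as [T [W [Y [[HT [Htop _]] [_ [-> [-> [HY _]]]]]]]].
    apply dist2_vertical_move; auto; lra.
  - destruct C as [pd [y [W [l [HG [HL [C|[C|C]]]]]]]].
    + destruct C as [_ [HnS [HM [Hmax [q0 [Hq0 [_ [Hq0m ->]]]]]]]].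
      apply (crowd_lift_clear n a S pd y W M q0); auto.
    + destruct C as [_ [_ [HSep [HD [HnD [_ Hside]]]]]].
      apply (fill_clear n a S pd y W M D); auto.
    + destruct C as [_ [_ [HM ->]]]. rewrite interp_const. apply H4; auto.
Qed.

Lemma move_clear_of_axis n a S m M D c : (1 < n)%nat -> 3 < a -> well_spaced S ->
  move_spec n a S m M D -> mirror_symmetric S c ->
  M <> mirror c M -> forall t, 0 <= t <= 1 -> 1 <= Rabs (fst (interp M D t) - c).
Proof.
  intros Hn Ha HC HS Hs Hne t Ht.
  assert (Hv : forall Y, S M -> 1 <= Rabs (fst (interp M (fst M, Y) t) - c)).
  { intros Y HM. rewrite interp_fst. simpl.
    replace (fst M + t * (fst M - fst M)) with (fst M) by ring.
    apply (mirror_far S c M HC Hs HM Hne). }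
  destruct HS as [C|[C|[C|[C|[C|C]]]]].
  - destruct C as [_ [_ [HM [Htop ->]]]]. apply Hv; auto.
  - destruct C as [A [B [[HA _] [_ [_ [-> ->]]]]]]. apply Hv; auto.
  - destruct C as [A [B [[HA [HB [HAB [Hy [Htop Huni]]]]] [_ [Hel [_ [-> ->]]]]]]].
    pose proof (Hs A HA) as HcA.
      destruct (Huni _ HcA eq_refl) as [E|E]; [exfalso; apply Hne; symmetry; auto|].
    assert (Ec : 2 * c - fst A = fst B) by (rewrite <- E; reflexivity).
    rewrite interp_fst; simpl.
    unfold sgn. pose proof (min_side_gt6 a Ha).
    assert (Hd4 : 4 <= (fst A - fst B)^2).
    { pose proof (proj1 HC A B HA HB HAB) as H4. unfold dist2 in H4. rewrite Hy in H4.
      replace (snd B - snd B) with 0 in H4 by ring. lra. }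
    assert (Ht2 : 0 <= t * min_side a) by (apply Rmult_le_pos; lra).
    destruct (Rle_dec 0 (fst A - fst B)).
    + assert (2 <= fst A - fst B) by nra.
      rewrite Rabs_right; nra.
    + assert (fst A - fst B <= -2) by nra.
      rewrite Rabs_left; nra.
  - destruct C as [A [B [W [Y [[HA _] [_ [_ [-> [-> _]]]]]]]]]. apply Hv; auto.
  - destruct C as [T [W [Y [[HT _] [_ [-> [-> _]]]]]]]. apply Hv; auto.
  - destruct C as [pd [y [W [l [HG [HL C]]]]]].
    destruct C as [C|[C|C]].
    + destruct C as [_ [_ [HM [_ [q0 [_ [_ [_ ->]]]]]]]]. apply Hv. apply HM.
    + destruct C as [_ [_ [HSep [HD [HnD [Hmaxv Hside]]]]]].
      destruct (fill_same_side n a S pd y W c M D Hn Ha HC HG Hs (proj1 (proj1 HSep)) Hne HD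
        (Hside c Hs Hne) t Ht)
        as [[H1 H2]|[H1 H2]]; [rewrite Rabs_right|rewrite Rabs_left]; lra.
    + destruct C as [_ [_ [HM ->]]]. rewrite interp_const. apply (mirror_far S c M HC Hs HM Hne).
Qed.

Lemma moves_like_trajectory n S Q Q' M D i t : moves_like n S Q Q' M D -> (i < n)%nat ->
  interp (Q i) (Q' i) t = Q i \/ (Q i = M /\ interp (Q i) (Q' i) t = interp M D t) \/
  (exists c, mirror_symmetric S c /\ Q i = mirror c M /\
     interp (Q i) (Q' i) t = mirror c (interp M D t)).
Proof.
  intros HMv Hi. destruct (HMv i Hi) as [E|[[E1 E2]|[c [Hs [E1 E2]]]]].
  - left. rewrite E. apply interp_const.
  - right; left. rewrite E1, E2. auto.
  - right; right. exists c. split; auto. split; auto. rewrite E1, E2. apply interp_mirror.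
Qed.

Lemma move_clear_of_mirror n a S m M D c t : (1 < n)%nat -> 3 < a -> well_spaced S ->
  move_spec n a S m M D -> mirror_symmetric S c -> M <> mirror c M -> 0 <= t <= 1 ->
  4 <= dist2 (interp M D t) (mirror c (interp M D t)).
Proof.
  intros Hn Ha HC HS Hs Ne Ht. rewrite dist2_self_mirror.
  pose proof (move_clear_of_axis n a S m M D c Hn Ha HC HS Hs Ne t Ht) as H.
  destruct (Rle_dec 0 (fst (interp M D t) - c));
    [rewrite Rabs_right in H by lra|rewrite Rabs_left in H by lra]; nra.
Qed.

Lemma moves_like_collision_free n a Q Q' m M D : (1 < n)%nat -> 3 < a -> no_overlap n Q ->
  move_spec n a (positions n Q) m M D -> moves_like n (positions n Q) Q Q' M D ->
  collision_free_move n Q Q'.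
Proof.
  intros Hn Ha Hno HS HMv. set (S := positions n Q) in *.
  pose proof (well_spaced_positions n Q ltac:(lia) Hno) as HC. fold S in HC.
  assert (Hd : forall i j, (i < n)%nat -> (j < n)%nat -> i <> j -> Q i <> Q j).
  { intros i j Hi Hj Hij E. apply Hij. apply (no_overlap_inj n Q); auto. }
  intros t Ht i j Hi Hj Hij. apply dist_ge2_of_dist2.
  assert (Hqi : forall q, S q -> q <> M -> 4 <= dist2 (interp M D t) q) by
    (intros; apply (move_clear_of_others n a S m M D); auto).
  destruct (moves_like_trajectory n S Q Q' M D i t HMv Hi) as [Ei|[[Mi Ei]|[ci [Hsi [Mi Ei]]]]];
  destruct (moves_like_trajectory n S Q Q' M D j t HMv Hj) as [Ej|[[Mj Ej]|[cj [Hsj [Mj Ej]]]]];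
    rewrite Ei, Ej.
  - apply dist2_ge4_of_dist. apply Hno; auto.
  - rewrite dist2_sym. apply Hqi; [exists i; auto|]. rewrite <- Mj. apply Hd; auto.
  - rewrite dist2_sym, dist2_mirror. apply Hqi; [apply Hsj; exists i; auto|]. intro E.
    apply (Hd i j Hi Hj Hij). rewrite Mj, <- E, mirror_involutive; auto.
  - apply Hqi; [exists j; auto|]. rewrite <- Mi. apply Hd; auto.
  - exfalso. apply (Hd i j Hi Hj Hij). congruence.
  - destruct (classic (M = mirror cj M)) as [E|Ne].
    + exfalso. apply (Hd i j Hi Hj Hij). rewrite Mi, Mj; auto.
    + apply (move_clear_of_mirror n a S m M D cj); auto.
  - rewrite dist2_mirror. apply Hqi; [apply Hsi; exists j; auto|]. intro E.
    apply (Hd i j Hi Hj Hij). rewrite Mi, <- E, mirror_involutive; auto.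
  - destruct (classic (M = mirror ci M)) as [E|Ne].
    + exfalso. apply (Hd i j Hi Hj Hij). rewrite Mi, Mj; auto.
    + rewrite dist2_sym. apply (move_clear_of_mirror n a S m M D ci); auto.
  - exfalso. apply (Hd i j Hi Hj Hij). rewrite Mi, Mj, (proj2 HC ci cj Hsi Hsj). auto.
Qed.


(** * Decrease of the rank *)

Lemma top1_lift S M Y : (forall q, S q -> snd q <= snd M) -> snd M < Y ->
  top1 (replace1 S M (fst M, Y)) (fst M, Y).
Proof.
  intros Htop HY. split; [left; auto|]. split.
  - intros q [->|[Hq _]]; simpl; [lra|]. specialize (Htop q Hq); lra.
  - intros q [->|[Hq _]] Hqy; auto. simpl in Hqy. specialize (Htop q Hq). lra.
Qed.

Lemma rank_lift_single n a S M Y : (forall q, S q -> snd q <= snd M) -> snd M < Y ->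
  has_rank n a (replace1 S M (fst M, Y)) (2 * n + 2)%nat.
Proof.
  intros. right; right; right; right; left. exists (fst M, Y). split; auto. apply top1_lift; auto.
Qed.

Lemma top2_lift S M c Y : (forall q, S q -> snd q <= snd M) -> M <> mirror c M -> snd M < Y ->
  top2 (replace2 S M (fst M, Y) c) (fst M, Y) (mirror c (fst M, Y)).
Proof.
  intros Htop Hne HY. pose proof (mirror_ne_x c M Hne) as Hx.
  split; [left; auto|]. split; [right; left; auto|]. split.
  { intro E. unfold mirror in E. injection E; intros. simpl in *. lra. }
  split; [reflexivity|]. split.
  - intros q [->|[->|[Hq _]]]; simpl; try lra. specialize (Htop q Hq); lra.
  - intros q [->|[->|[Hq _]]] Hqy; auto. simpl in Hqy. specialize (Htop q Hq). lra.
Qed.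

Lemma rank_lift_mirrored n a S M c Y : (forall q, S q -> snd q <= snd M) -> M <> mirror c M ->
  snd M + 2 <= Y ->
  exists m', (m' <= 2 * n + 4)%nat /\ has_rank n a (replace2 S M (fst M, Y) c) m'.
Proof.
  intros Htop Hne HY. pose proof (top2_lift S M c Y Htop Hne ltac:(lra)) as HA.
  destruct (Rlt_dec (Rabs (fst (fst M, Y) - fst (mirror c (fst M, Y)))) (min_side a)) as [Hl|Hl].
  - exists (2 * n + 4)%nat. split; [lia|]. right; right; left.
    exists (fst M, Y), (mirror c (fst M, Y)). split; auto. split; auto. split; auto.
    intros q [->|[->|[Hq _]]] H1 H2; try contradiction. simpl. specialize (Htop q Hq); lra.
  - exists (2 * n + 3)%nat. split; [lia|]. right; right; right; left.
    exists (fst M, Y), (mirror c (fst M, Y)). split; auto. split; auto. apply Rnot_lt_le; auto.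
Qed.

Lemma crowd_list_exists n S pd : finite_le n S -> exists l, crowd_list n S pd l
  /\ (length l <= n)%nat.
Proof.
  intros [H1 H2]. destruct (H1 (fun q => ~ slot n pd q)) as [l [Hl Hin]].
  exists l. split; [split; auto|]. apply H2; auto. intros q Hq; apply Hin; auto.
Qed.

Lemma has_rank_crowd n a S pd y W l : good_ngon n a S pd y W -> crowd_list n S pd l ->
  has_rank n a S (2 * length l + 1).
Proof.
  intros HG HL. do 5 right. exists pd, y, W, l, 1%nat.
  split; [auto|split; [auto|split; [right; auto|split; [discriminate|auto]]]].
Qed.

Lemma has_rank_crowd_separated n a S pd y W l : good_ngon n a S pd y W -> crowd_list n S pd l ->
  crowd_separated n S pd -> has_rank n a S (2 * length l).
Proof.
  intros HG HL HSep. do 5 right. exists pd, y, W, l, 0%nat.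
  split; [auto|split; [auto|split; [left; auto|split; [auto|lia]]]].
Qed.

Lemma rank_fresh_ngon n a S pd Y W : (1 < n)%nat -> 3 < a -> anchored n a S pd Y -> 0 <= W ->
  (forall q, S q -> snd q = Y \/
     (Rabs (fst q - ngon_cx pd) <= W /\ snd q + crowd_gap pd W + 2 <= Y)) ->
  finite_le n S -> exists m', (m' <= 2 * n + 1)%nat /\ has_rank n a S m'.
Proof.
  intros Hn Ha HA HW Hq HF.
  pose proof (anchored_facts n a S pd Y Hn Ha HA) as Hfacts. pose proof (ngon_r_pos Hfacts).
  destruct (crowd_list_exists n S pd HF) as [l [HL Hlen]].
  exists (2 * length l + 1)%nat. split; [lia|]. apply (has_rank_crowd n a S pd Y W); auto.
  unfold crowd_gap in Hq. split; auto.
  - intros w v Hw Hv HSw HSv. destruct (Hq w HSw) as [E|[_ Hb]].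
    + rewrite E. apply (slots_below_top Hfacts); auto.
    + exfalso. pose proof (slots_above_bottom Hfacts Hw). lra.
  - intros q [HSq Hns]. unfold crowd_gap.
    destruct (Hq q HSq) as [E|[Hb1 Hb2]]; [exfalso; apply Hns, (top_robots_on_slots Hfacts); auto|].
    split; auto. lra.
  - intros [q [[HSq Hns] Hlt]]. exfalso. unfold crowd_gap in Hlt.
    destruct (Hq q HSq) as [E|[Hb1 Hb2]]; [apply Hns, (top_robots_on_slots Hfacts); auto|lra].
Qed.

Lemma top2_mirror S A B c : top2 S A B -> mirror_symmetric S c -> A <> mirror c A -> mirror c A = B.
Proof.
  intros [HA [HB [Hne [Hy [Htop Huni]]]]] Hs HnA.
  destruct (Huni _ (Hs A HA) eq_refl) as [E|E]; auto. exfalso; apply HnA; auto.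
Qed.

Lemma rank_push_apart n a S A B : (1 < n)%nat -> 3 < a -> top2 S A B ->
  let D := (fst A + min_side a * sgn (fst A - fst B), snd A) in
  has_rank n a (replace1 S A D) (2 * n + 3)%nat /\
  (forall c, mirror_symmetric S c -> A <> mirror c A ->
    has_rank n a (replace2 S A D c) (2 * n + 3)%nat).
Proof.
  intros Hn Ha HA2 D. pose proof (min_side_gt6 a Ha) as Hs0.
  pose proof HA2 as [HA [HB [Hne [Hy [Htop Huni]]]]].
  pose proof (top2_x_neq S A B HA2) as Hx.
  assert (HDx : Rabs (fst D - fst B) = Rabs (fst A - fst B) + min_side a).
  { unfold D, sgn; simpl. destruct (Rle_dec 0 (fst A - fst B)).
    - rewrite !Rabs_right; lra.
    - rewrite !Rabs_left; lra. }
  split.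
  - right; right; right; left. exists D, B.
    split; [|split; [rewrite HDx; pose proof (Rabs_pos (fst A - fst B)); lra|auto]].
    split; [left; auto|]. split; [right; split; auto|]. split.
    { intro E. rewrite E in HDx. rewrite Rminus_diag, Rabs_R0 in HDx.
      pose proof (Rabs_pos (fst A - fst B)); lra. }
    split; [unfold D; simpl; auto|]. split.
    + intros q [->|[Hq _]]; unfold D; simpl; [lra|]. apply Htop; auto.
    + intros q [->|[Hq Hq2]] Hqy; [left; auto|]. unfold D in Hqy; simpl in Hqy.
      destruct (Huni q Hq Hqy); [contradiction|right; auto].
  - intros c Hs HnA. pose proof (top2_mirror S A B c HA2 Hs HnA) as EB.
    assert (Ec : 2 * c - fst A = fst B) by (rewrite <- EB; reflexivity).
    assert (HDD : Rabs (fst D - fst (mirror c D)) = Rabs (fst A - fst B) + 2 * min_side a).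
    { unfold D, mirror, sgn; simpl. destruct (Rle_dec 0 (fst A - fst B)).
      - rewrite !Rabs_right; lra.
      - rewrite !Rabs_left; lra. }
    right; right; right; left. exists D, (mirror c D).
    split; [|split; [rewrite HDD; pose proof (Rabs_pos (fst A - fst B)); lra|auto]].
    split; [left; auto|]. split; [right; left; auto|]. split.
    { intro E. rewrite <- E in HDD. rewrite Rminus_diag, Rabs_R0 in HDD.
      pose proof (Rabs_pos (fst A - fst B)); lra. }
    split; [unfold D, mirror; simpl; auto|]. split.
    + intros q [->|[->|[Hq _]]]; unfold D, mirror; simpl; try lra. apply Htop; auto.
    + intros q [->|[->|[Hq [Hq1 Hq2]]]] Hqy; [left; auto|right; auto|].
      unfold D in Hqy; simpl in Hqy.
      exfalso. destruct (Huni q Hq Hqy); [contradiction|]. apply Hq2. rewrite EB; auto.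
Qed.

Lemma rank_lift_pair_far n a S A B W Y c : (1 < n)%nat -> 3 < a -> top2 S A B ->
  min_side a <= Rabs (fst A - fst B) ->
  snd A < Y -> 0 <= W ->
  (forall q, S q -> q <> A -> q <> B ->
       Rabs (fst q - ngon_cx (ngon_of_top2 n A B)) <= W
         /\ snd q + crowd_gap (ngon_of_top2 n A B) W + 2 <= Y) ->
  mirror_symmetric S c -> A <> mirror c A -> finite_le n (replace2 S A (fst A, Y) c) ->
  exists m', (m' <= 2 * n + 1)%nat /\ has_rank n a (replace2 S A (fst A, Y) c) m'.
Proof.
  intros Hn Ha HA2 Hd HY HW Hq Hs HnA HF.
  pose proof HA2 as [HA [HB [Hne [Hy [Htop Huni]]]]].
  pose proof (top2_mirror S A B c HA2 Hs HnA) as EB.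
  assert (Ec : 2 * c - fst A = fst B) by (rewrite <- EB; reflexivity).
  set (D := (fst A, Y)).
  assert (ED : mirror c D = (fst B, Y)) by (unfold D, mirror; simpl; rewrite Ec; auto).
  assert (Hpcx : ngon_cx (ngon_of_top2 n D (mirror c D)) = ngon_cx (ngon_of_top2 n A B)) by
    (rewrite ED; unfold ngon_of_top2; simpl; auto).
  assert (Hpr : ngon_r (ngon_of_top2 n D (mirror c D)) = ngon_r (ngon_of_top2 n A B)) by
    (rewrite ED; unfold ngon_of_top2, top2_radius; simpl; auto).
  apply (rank_fresh_ngon n a _ (ngon_of_top2 n D (mirror c D)) Y W Hn Ha); auto.
  - right. exists D, (mirror c D). split; [apply top2_lift; auto|]. split; [|auto].
    rewrite ED; unfold D; simpl; auto.
  - intros q [->|[->|[Hq1 [Hq2 Hq3]]]]; [left; auto|left; auto|].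
    right. rewrite Hpcx. unfold crowd_gap. rewrite Hpr. apply Hq; auto. rewrite <- EB; auto.
Qed.

Lemma rank_lift_top_far n a S T W Y : (1 < n)%nat -> 3 < a -> top1 S T -> snd T < Y -> 0 <= W ->
  (forall q, S q -> q <> T -> Rabs (fst q - fst T) <= W
    /\ snd q + crowd_gap (ngon_of_top1 n a T) W + 2 <= Y) ->
  finite_le n (replace1 S T (fst T, Y)) ->
  exists m', (m' <= 2 * n + 1)%nat /\ has_rank n a (replace1 S T (fst T, Y)) m'.
Proof.
  intros Hn Ha HA1 HY HW Hq HF. pose proof HA1 as [HT [Htop Huni]].
  apply (rank_fresh_ngon n a _ (ngon_of_top1 n a (fst T, Y)) Y W Hn Ha); auto.
  - left. exists (fst T, Y). split; [apply top1_lift; auto|]. split; auto.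
  - intros q [->|[Hq1 Hq2]]; [left; auto|]. right. unfold crowd_gap, ngon_of_top1; simpl.
    apply (Hq q Hq1 Hq2).
Qed.

Lemma crowd_replace1 n S pd M D q :
  crowd n (replace1 S M D) pd q -> q = D \/ (crowd n S pd q /\ q <> M).
Proof. intros [[->|[Hq Hne]] Hns]; [left|right; split; [split|]]; auto. Qed.

Lemma crowd_replace2 n S pd M D c q : crowd n (replace2 S M D c) pd q ->
  q = D \/ q = mirror c D \/ (crowd n S pd q /\ q <> M /\ q <> mirror c M).
Proof.
  intros [[->|[->|[Hq [Hne1 Hne2]]]] Hns]; [left|right; left|right; right; split; [split|]]; auto.
Qed.

Lemma crowd_list_replace1_le n S pd M D l l' : crowd_list n S pd l ->
  crowd_list n (replace1 S M D) pd l' -> crowd n S pd M -> (length l' <= length l)%nat.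
Proof.
  intros [_ Hl] [Hl'nd Hl'] HM. apply (len_replace1 l' l M D Hl'nd); [|apply Hl; auto].
  intros q Hq. apply Hl' in Hq.
  destruct (crowd_replace1 n S pd M D q Hq) as [->|[Hq' Hne]]; [left|right; split; [apply Hl|]];
    auto.
Qed.

Lemma crowd_list_replace1_lt n S pd M D l l' : crowd_list n S pd l ->
  crowd_list n (replace1 S M D) pd l' -> crowd n S pd M -> slot n pd D ->
    (length l' < length l)%nat.
Proof.
  intros [_ Hl] [Hl'nd Hl'] HM HD. apply (len_remove1 l' l M Hl'nd); [|apply Hl; auto].
  intros q Hq. apply Hl' in Hq.
  destruct (crowd_replace1 n S pd M D q Hq) as [->|[Hq' Hne]]; [exfalso; apply (proj2 Hq), HD|].
  split; [apply Hl|]; auto.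
Qed.

Lemma crowd_list_replace2_le n S pd M D c l l' : crowd_list n S pd l ->
  crowd_list n (replace2 S M D c) pd l' -> crowd n S pd M -> crowd n S pd (mirror c M) ->
  M <> mirror c M -> (length l' <= length l)%nat.
Proof.
  intros [_ Hl] [Hl'nd Hl'] HM HsM Hne.
  apply (len_replace2 l' l M (mirror c M) D (mirror c D) Hl'nd); [|apply Hl; auto|apply Hl;
    auto|auto].
  intros q Hq. apply Hl' in Hq.
  destruct (crowd_replace2 n S pd M D c q Hq) as [->|[->|[Hq' [Hne1 Hne2]]]];
    [left|right; left|right; right; split; [apply Hl|]]; auto.
Qed.

Lemma crowd_list_replace2_lt n S pd M D c l l' : crowd_list n S pd l ->
  crowd_list n (replace2 S M D c) pd l' -> crowd n S pd M -> crowd n S pd (mirror c M) ->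
  M <> mirror c M -> slot n pd D -> slot n pd (mirror c D) -> (length l' + 2 <= length l)%nat.
Proof.
  intros [_ Hl] [Hl'nd Hl'] HM HsM Hne HD HsD.
  apply (len_remove2 l' l M (mirror c M) Hl'nd); [|apply Hl; auto|apply Hl; auto|auto].
  intros q Hq. apply Hl' in Hq.
  destruct (crowd_replace2 n S pd M D c q Hq) as [->|[->|[Hq' [Hne1 Hne2]]]].
  - exfalso. apply (proj2 Hq), HD.
  - exfalso. apply (proj2 Hq), HsD.
  - split; [apply Hl|]; auto.
Qed.

Section CrowdLift.

Variables (n : nat) (a : R) (S : pt -> Prop) (pd : ngon) (y W : R) (l : list pt) (M q0 : pt).
Hypothesis n_gt1 : (1 < n)%nat.
Hypothesis a_gt3 : 3 < a.
Hypothesis good : good_ngon n a S pd y W.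
Hypothesis crowd_l : crowd_list n S pd l.
Hypothesis not_separated : ~ crowd_separated n S pd.
Hypothesis crowd_M : crowd n S pd M.
Hypothesis q0_second : forall q, crowd n S pd q -> q <> M -> snd q <= snd q0.
Hypothesis crowd_q0 : crowd n S pd q0.

Let D := (fst M, snd q0 + 2).

Lemma lift_target_low : snd D <= y - crowd_gap pd W + 2.
Proof.
  pose proof (not_separated_crowd_low n a S pd y W good not_separated q0 crowd_q0).
  unfold D; simpl; lra.
Qed.

Lemma lift_target_off_slots v : slot n pd v -> snd v = snd D -> False.
Proof.
  intros Hv E. pose proof (good_ngon_facts n a S pd y W n_gt1 a_gt3 good) as Hfacts.
  pose proof (slots_above_bottom Hfacts Hv). pose proof (ngon_r_pos Hfacts).
  pose proof (good_width_nonneg good). pose proof lift_target_low. unfold crowd_gap in *. lra.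
Qed.

Lemma crowd_lift_single_separated : crowd_separated n (replace1 S M D) pd.
Proof.
  right. exists D. split; [|split].
  - split; [left; auto|]. intro Hs. apply (lift_target_off_slots D Hs eq_refl).
  - intros q Hq. destruct (crowd_replace1 n S pd M D q Hq) as [->|[Hq' Hne]]; [lra|].
    specialize (q0_second q Hq' Hne). unfold D; simpl; lra.
  - intros q Hq Hlt. left. destruct (crowd_replace1 n S pd M D q Hq) as [->|[Hq' Hne]]; auto.
    specialize (q0_second q Hq' Hne). unfold D in Hlt; simpl in Hlt. lra.
Qed.

Lemma crowd_lift_single_good : good_ngon n a (replace1 S M D) pd y W.
Proof.
  pose proof (good_ngon_facts n a S pd y W n_gt1 a_gt3 good) as Hfacts.
  pose proof (crowd_below_top n a S pd y W M n_gt1 a_gt3 good crowd_M) as HMy.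
  pose proof lift_target_low as HDy. pose proof (ngon_r_pos Hfacts).
    pose proof (good_width_nonneg good).
  unfold crowd_gap in HDy. split.
  - apply (anchored_mono n a S); [apply good| |].
    + intros q Hq Hqy. right. split; auto. intro E; rewrite E in Hqy; lra.
    + intros q [->|[Hq _]]; [right; lra|left; auto].
  - apply good.
  - intros w v Hw Hv [->|[HSw _]] HSv; [exfalso; apply (lift_target_off_slots D Hw eq_refl)|].
    apply (good_filled_top_down good); auto.
    intro HSv'. apply HSv. right. split; auto. intro E; subst. apply (proj2 crowd_M); auto.
  - intros q Hq. destruct (crowd_replace1 n S pd M D q Hq) as [->|[Hq' _]].
    + split; [unfold D; simpl; apply (good_crowd_low good crowd_M)|unfold crowd_gap; lra].
    + apply (good_crowd_low good); auto.
  - intros _. apply crowd_lift_single_separated.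
Qed.

Lemma rank_crowd_lift_single : finite_le n (replace1 S M D) ->
  exists m', (m' < 2 * length l + 1)%nat /\ has_rank n a (replace1 S M D) m'.
Proof.
  intros HF. destruct (crowd_list_exists n _ pd HF) as [l' [Hl' _]].
  exists (2 * length l')%nat. split.
  - pose proof (crowd_list_replace1_le n S pd M D l l' crowd_l Hl' crowd_M). lia.
  - apply (has_rank_crowd_separated n a _ pd y W); auto.
    + apply crowd_lift_single_good.
    + apply crowd_lift_single_separated.
Qed.

Variable c : R.
Hypothesis sym_c : mirror_symmetric S c.
Hypothesis M_off_axis : M <> mirror c M.

Lemma crowd_lift_pair_separated : crowd_separated n (replace2 S M D c) pd.
Proof.
  assert (HsDy : snd (mirror c D) = snd D) by reflexivity.
  right. exists D. split; [|split].
  - split; [left; auto|]. intro Hs. apply (lift_target_off_slots D Hs eq_refl).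
  - intros q Hq. destruct (crowd_replace2 n S pd M D c q Hq) as [->|[->|[Hq' [Hne _]]]];
      [lra|rewrite HsDy; lra|].
    specialize (q0_second q Hq' Hne). unfold D; simpl; lra.
  - intros q Hq Hlt. destruct (crowd_replace2 n S pd M D c q Hq) as [->|[->|[Hq' [Hne _]]]].
    + left; auto.
    + right. exists c. split; auto. apply mirror_symmetric_replace2; auto.
    + specialize (q0_second q Hq' Hne). unfold D in Hlt; simpl in Hlt. lra.
Qed.

Lemma crowd_lift_pair_good : good_ngon n a (replace2 S M D c) pd y W.
Proof.
  pose proof (good_ngon_facts n a S pd y W n_gt1 a_gt3 good) as Hfacts.
  pose proof (crowd_mirror n a S pd y W c M n_gt1 a_gt3 good sym_c crowd_M) as HsM.
  pose proof (crowd_below_top n a S pd y W M n_gt1 a_gt3 good crowd_M) as HMy.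
  pose proof (crowd_below_top n a S pd y W _ n_gt1 a_gt3 good HsM) as HsMy.
  pose proof lift_target_low as HDy. pose proof (ngon_r_pos Hfacts).
    pose proof (good_width_nonneg good).
  assert (HsDy : snd (mirror c D) = snd D) by reflexivity.
  unfold crowd_gap in HDy. split.
  - apply (anchored_mono n a S); [apply good| |].
    + intros q Hq Hqy. right; right. split; auto. split; intro E; rewrite E in Hqy; lra.
    + intros q [->|[->|[Hq _]]]; [right; lra|right; rewrite HsDy; lra|left; auto].
  - apply good.
  - intros w v Hw Hv [->|[->|[HSw _]]] HSv.
    + exfalso; apply (lift_target_off_slots D Hw eq_refl).
    + exfalso; apply (lift_target_off_slots _ Hw HsDy).
    + apply (good_filled_top_down good); auto.
      intro HSv'. apply HSv. right; right. split; auto. split; intro E; subst.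
      * apply (proj2 crowd_M); auto.
      * apply (proj2 HsM); auto.
  - intros q Hq. destruct (crowd_replace2 n S pd M D c q Hq) as [->|[->|[Hq' _]]].
    + split; [unfold D; simpl; apply (good_crowd_low good crowd_M)|unfold crowd_gap; lra].
    + split; [|rewrite HsDy; unfold crowd_gap; lra].
      unfold D, mirror; simpl. rewrite (mirror_axis_center Hfacts sym_c).
      replace (2 * ngon_cx pd - fst M - ngon_cx pd) with (- (fst M - ngon_cx pd)) by ring.
      rewrite Rabs_Ropp. apply (good_crowd_low good crowd_M).
    + apply (good_crowd_low good); auto.
  - intros _. apply crowd_lift_pair_separated.
Qed.

Lemma rank_crowd_lift_pair : finite_le n (replace2 S M D c) ->
  exists m', (m' < 2 * length l + 1)%nat /\ has_rank n a (replace2 S M D c) m'.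
Proof.
  intros HF. destruct (crowd_list_exists n _ pd HF) as [l' [Hl' _]].
  pose proof (crowd_mirror n a S pd y W c M n_gt1 a_gt3 good sym_c crowd_M) as HsM.
  exists (2 * length l')%nat. split.
  - pose proof (crowd_list_replace2_le n S pd M D c l l' crowd_l Hl' crowd_M HsM M_off_axis). lia.
  - apply (has_rank_crowd_separated n a _ pd y W); auto.
    + apply crowd_lift_pair_good.
    + apply crowd_lift_pair_separated.
Qed.

End CrowdLift.

Section Fill.

Variables (n : nat) (a : R) (S : pt -> Prop) (pd : ngon) (y W : R) (l : list pt) (M D : pt).
Hypothesis n_gt1 : (1 < n)%nat.
Hypothesis a_gt3 : 3 < a.
Hypothesis spaced : well_spaced S.
Hypothesis good : good_ngon n a S pd y W.
Hypothesis crowd_l : crowd_list n S pd l.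
Hypothesis leader : crowd_leader n S pd M.
Hypothesis slot_D : slot n pd D.
Hypothesis free_D : ~ S D.
Hypothesis D_highest_free : forall v, slot n pd v -> ~ S v -> snd v <= snd D.

Lemma fill_free_slot v : slot n pd v -> ~ replace1 S M D v -> ~ S v.
Proof.
  intros Hv HSv HSv'. apply HSv. right. split; auto. intro E; subst.
    apply (proj2 (proj1 leader)); auto.
Qed.

Lemma fill_single_crowd q : crowd n (replace1 S M D) pd q -> crowd n S pd q /\ q <> M.
Proof.
  intros Hq. destruct (crowd_replace1 n S pd M D q Hq) as [->|H]; [exfalso;
    apply (proj2 Hq), slot_D|auto].
Qed.

Lemma fill_single_good : good_ngon n a (replace1 S M D) pd y W.
Proof.
  pose proof (good_ngon_facts n a S pd y W n_gt1 a_gt3 good) as Hfacts.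
  destruct leader as [HM [Hmax Habove]].
  pose proof (crowd_below_top n a S pd y W M n_gt1 a_gt3 good HM) as HMy.
  destruct (good_crowd_low good HM) as [_ HMb].
  split.
  - apply (anchored_mono n a S); [apply good| |].
    + intros q Hq Hqy. right. split; auto. intro E; rewrite E in Hqy; lra.
    + intros q [->|[Hq _]]; [|left; auto]. right.
      destruct (top_slots_occupied Hfacts slot_D); [auto|contradiction].
  - apply good.
  - intros w v Hw Hv [->|[HSw _]] HSv.
    + apply D_highest_free; auto. apply fill_free_slot; auto.
    + apply (good_filled_top_down good); auto. apply fill_free_slot; auto.
  - intros q Hq. apply (good_crowd_low good), (fill_single_crowd q Hq).
  - intros [q [Hq Hlt]]. destruct (fill_single_crowd q Hq) as [Hq' Hne].
    destruct (Rlt_dec (snd M - 2) (snd q)) as [Hl|Hl]; [|exfalso; lra].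
    destruct (Habove q Hq' Hl) as [E|[c [Hs E]]]; [contradiction|].
    right. exists q. split; auto. split.
    + intros q' Hq'2. destruct (fill_single_crowd q' Hq'2). rewrite E. apply Hmax; auto.
    + intros q' Hq'2 Hl2. destruct (fill_single_crowd q' Hq'2) as [Hq'3 Hne3]. left.
      rewrite E in Hl2. destruct (Habove q' Hq'3 Hl2) as [E2|[c' [Hs' E2]]]; [contradiction|].
      rewrite (proj2 spaced c' c Hs' Hs) in E2. rewrite E2, E; auto.
Qed.

Lemma rank_fill_single : finite_le n (replace1 S M D) ->
  exists m', (m' < 2 * length l)%nat /\ has_rank n a (replace1 S M D) m'.
Proof.
  intros HF. destruct (crowd_list_exists n _ pd HF) as [l' [Hl' _]].
  exists (2 * length l' + 1)%nat. split.
  - pose proof (crowd_list_replace1_lt n S pd M D l l' crowd_l Hl' (proj1 leader) slot_D). lia.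
  - apply (has_rank_crowd n a _ pd y W); auto. apply fill_single_good.
Qed.

Variable c : R.
Hypothesis sym_c : mirror_symmetric S c.
Hypothesis M_off_axis : M <> mirror c M.

Lemma fill_mirror_slot : slot n pd (mirror c D).
Proof.
  rewrite (mirror_axis_center (good_ngon_facts n a S pd y W n_gt1 a_gt3 good) sym_c).
  apply slot_mirror; auto.
Qed.

Lemma fill_pair_crowd q : crowd n (replace2 S M D c) pd q ->
  crowd n S pd q /\ q <> M /\ q <> mirror c M.
Proof.
  intros Hq. destruct (crowd_replace2 n S pd M D c q Hq) as [->|[->|H]]; auto; exfalso;
    apply (proj2 Hq); [apply slot_D|apply fill_mirror_slot].
Qed.

Lemma fill_pair_good : good_ngon n a (replace2 S M D c) pd y W.
Proof.
  pose proof (good_ngon_facts n a S pd y W n_gt1 a_gt3 good) as Hfacts.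
  destruct leader as [HM [Hmax Habove]].
  pose proof (crowd_mirror n a S pd y W c M n_gt1 a_gt3 good sym_c HM) as HsM.
  pose proof (crowd_below_top n a S pd y W M n_gt1 a_gt3 good HM) as HMy.
  pose proof (crowd_below_top n a S pd y W _ n_gt1 a_gt3 good HsM) as HsMy.
  destruct (good_crowd_low good HM) as [_ HMb].
  assert (HsDy : snd (mirror c D) = snd D) by reflexivity.
  assert (Hfree : forall v, slot n pd v -> ~ replace2 S M D c v -> ~ S v).
  { intros v Hv HSv HSv'. apply HSv. right; right. split; auto. split; intro E; subst.
    - apply (proj2 HM); auto.
    - apply (proj2 HsM); auto. }
  assert (HDy : snd D < y) by (destruct (top_slots_occupied Hfacts slot_D); [auto|contradiction]).
  split.
  - apply (anchored_mono n a S); [apply good| |].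
    + intros q Hq Hqy. right; right. split; auto. split; intro E; rewrite E in Hqy; lra.
    + intros q [->|[->|[Hq _]]]; [right; auto|right; rewrite HsDy; auto|left; auto].
  - apply good.
  - intros w v Hw Hv [->|[->|[HSw _]]] HSv.
    + apply D_highest_free; auto.
    + rewrite HsDy. apply D_highest_free; auto.
    + apply (good_filled_top_down good); auto.
  - intros q Hq. apply (good_crowd_low good), (fill_pair_crowd q Hq).
  - intros [q [Hq Hlt]]. exfalso. destruct (fill_pair_crowd q Hq) as [Hq' [Hne1 Hne2]].
    destruct (Rlt_dec (snd M - 2) (snd q)) as [Hl|Hl]; [|lra].
    destruct (Habove q Hq' Hl) as [E|[c' [Hs' E]]]; [contradiction|].
    rewrite (proj2 spaced c' c Hs' sym_c) in E. contradiction.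
Qed.

Lemma rank_fill_pair : finite_le n (replace2 S M D c) ->
  exists m', (m' < 2 * length l)%nat /\ has_rank n a (replace2 S M D c) m'.
Proof.
  intros HF. destruct (crowd_list_exists n _ pd HF) as [l' [Hl' _]].
  pose proof (crowd_mirror n a S pd y W c M n_gt1 a_gt3 good sym_c (proj1 leader)) as HsM.
  exists (2 * length l' + 1)%nat. split.
  - pose proof (crowd_list_replace2_lt n S pd M D c l l' crowd_l Hl' (proj1 leader) HsM M_off_axis
      slot_D fill_mirror_slot). lia.
  - apply (has_rank_crowd n a _ pd y W); auto. apply fill_pair_good.
Qed.

End Fill.

Lemma rank_decreases n a S m M D : (1 < n)%nat -> 3 < a -> well_spaced S -> move_spec n a S m M D ->
  D <> M ->
  (finite_le n (replace1 S M D) -> exists m', (m' < m)%nat /\ has_rank n a (replace1 S M D) m') /\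
  (forall c, mirror_symmetric S c -> M <> mirror c M -> finite_le n (replace2 S M D c) ->
     exists m', (m' < m)%nat /\ has_rank n a (replace2 S M D c) m').
Proof.
  intros Hn Ha HC HS HDM.
  destruct HS as [C|[C|[C|[C|[C|C]]]]].
  - destruct C as [_ [-> [HM [Htop ->]]]]. split.
    + intros _. exists (2 * n + 2)%nat. split; [lia|]. apply rank_lift_single; auto; lra.
    + intros c Hs HnM _.
      destruct (rank_lift_mirrored n a S M c (snd M + 2) Htop HnM ltac:(lra)) as [m' [Hm' H]].
      exists m'; split; [lia|auto].
  - destruct C as [A [B [HA2 [_ [-> [-> ->]]]]]]. pose proof HA2 as [_ [_ [_ [_ [Htop _]]]]]. split.
    + intros _. exists (2 * n + 2)%nat. split; [lia|]. apply rank_lift_single; auto; lra.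
    + intros c Hs HnM _.
      destruct (rank_lift_mirrored n a S A c (snd A + 2) Htop HnM ltac:(lra)) as [m' [Hm' H]].
      exists m'; split; [lia|auto].
  - destruct C as [A [B [HA2 [_ [_ [-> [-> ->]]]]]]].
    destruct (rank_push_apart n a S A B Hn Ha HA2) as [H1 H2]. split.
    + intros _. exists (2 * n + 3)%nat. split; [lia|auto].
    + intros c Hs HnM _. exists (2 * n + 3)%nat. split; [lia|auto].
  - destruct C as [A [B [W [Y [HA2 [Hd [-> [-> [-> [HY [HW Hq]]]]]]]]]]].
    pose proof HA2 as [_ [_ [_ [_ [Htop _]]]]]. split.
    + intros _. exists (2 * n + 2)%nat. split; [lia|]. apply rank_lift_single; auto.
    + intros c Hs HnM HF.
      destruct (rank_lift_pair_far n a S A B W Y c Hn Ha HA2 Hd HY HW Hq Hs HnM HF) as [m' [Hm' H]].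
      exists m'; split; [lia|auto].
  - destruct C as [T [W [Y [HA1 [-> [-> [-> [HY [HW Hq]]]]]]]]]. split.
    + intros HF. destruct (rank_lift_top_far n a S T W Y Hn Ha HA1 HY HW Hq HF) as [m' [Hm' H]].
      exists m'; split; [lia|auto].
    + intros c Hs HnM _. exfalso. destruct HA1 as [HT [Htop Huni]].
      apply HnM. symmetry. apply Huni; auto.
  - destruct C as [pd [y [W [l [HG [HL [C|[C|C]]]]]]]].
    + destruct C as [-> [HnS [HM [_ [q0 [Hq0 [_ [Hq0m ->]]]]]]]]. split.
      * apply (rank_crowd_lift_single n a S pd y W l M q0); auto.
      * intros c Hs HnM. apply (rank_crowd_lift_pair n a S pd y W l M q0); auto.
    + destruct C as [-> [_ [HSep [HD [HnD [Hmaxv _]]]]]]. split.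
      * apply (rank_fill_single n a S pd y W l M D); auto.
      * intros c Hs HnM. apply (rank_fill_pair n a S pd y W l M D); auto.
    + destruct C as [_ [_ [_ E]]]. contradiction.
Qed.

Lemma moves_like_target_ne n S Q Q' M D : moves_like n S Q Q' M D ->
  (exists i, (i < n)%nat /\ Q' i <> Q i) -> D <> M.
Proof.
  intros HMv [i [Hi Hne]] E. destruct (HMv i Hi) as [E'|[[E1 E2]|[c [_ [E1 E2]]]]];
    apply Hne; congruence.
Qed.

Section MovedRobots.

Variables (n : nat) (Q Q' : config) (M D : pt) (iM : nat).
Hypothesis no_overlap_Q : no_overlap n Q.
Hypothesis moves : moves_like n (positions n Q) Q Q' M D.
Hypothesis iM_lt : (iM < n)%nat.
Hypothesis Q_iM : Q iM = M.

Lemma moved_robot j : (j < n)%nat -> Q' j <> Q j ->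
  (Q j = M /\ Q' j = D) \/
  (exists c, mirror_symmetric (positions n Q) c /\ Q j = mirror c M /\ Q' j = mirror c D).
Proof. intros Hj Hne. destruct (moves j Hj) as [E|[E|E]]; [contradiction|left|right]; auto. Qed.

Lemma unmoved_robot j : (j < n)%nat -> Q j <> M ->
  (forall c, mirror_symmetric (positions n Q) c -> Q j <> mirror c M) -> Q' j = Q j.
Proof.
  intros Hj HM Hc. destruct (moves j Hj) as [E|[[E _]|[c [Hs [E _]]]]]; auto.
  - contradiction.
  - exfalso. apply (Hc c Hs E).
Qed.

Lemma moved_single j : (j < n)%nat -> Q' j <> Q j ->
  (forall k, (k < n)%nat -> k <> j -> Q' k = Q k) ->
  exists g, positions n (map_config g Q') = replace1 (positions n Q) M D.
Proof.
  intros Hj Hmoved Hfix.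
  destruct (moved_robot j Hj Hmoved) as [[E1 E2]|[c [Hs [E1 E2]]]].
  - exists iso_id. rewrite <- iso_img_positions, iso_img_id.
    apply (positions_replace1 n Q Q' j M D no_overlap_Q Hj E1 E2 Hfix).
  - exists (mirror_iso c). rewrite <- iso_img_positions.
    rewrite (positions_replace1 n Q Q' j _ _ no_overlap_Q Hj E1 E2 Hfix).
    rewrite iso_img_mirror_replace1, !mirror_involutive; auto.
Qed.

(* Besides [M], only its mirror image can move; so either a single robot moved, and the
   outcome is [replace1] up to a reflection, or a mirrored pair moved. *)
Lemma moved_outcome :
  (forall c1 c2, mirror_symmetric (positions n Q) c1 -> mirror_symmetric (positions n Q) c2 ->
     c1 = c2) ->
  (exists i, (i < n)%nat /\ Q' i <> Q i) ->
  (exists g, positions n (map_config g Q') = replace1 (positions n Q) M D) \/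
  (exists c, mirror_symmetric (positions n Q) c /\ M <> mirror c M /\
     positions n Q' = replace2 (positions n Q) M D c).
Proof.
  intros Huniq [i1 [Hi1 Hmoved1]].
  assert (Hinj : forall i j, (i < n)%nat -> (j < n)%nat -> Q i = Q j -> i = j)
    by (intros; apply (no_overlap_inj n Q); auto).
  destruct (classic (exists c, mirror_symmetric (positions n Q) c /\ M <> mirror c M))
    as [[c [Hs Hoff]]|Hon].
  - assert (HsM : positions n Q (mirror c M)) by (apply Hs; exists iM; auto).
    destruct HsM as [iS [HiS EiS]]. symmetry in EiS.
    assert (HiMS : iM <> iS) by (intro E; subst; apply Hoff; congruence).
    assert (Hfix : forall j, (j < n)%nat -> j <> iM -> j <> iS -> Q' j = Q j).
    { intros j Hj N1 N2. apply unmoved_robot; auto.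
      - intro E. apply N1, Hinj; congruence.
      - intros c' Hs' E. rewrite (Huniq c' c Hs' Hs) in E. apply N2, Hinj; congruence. }
    assert (HiM_dest : Q' iM <> Q iM -> Q' iM = D).
    { intro E. destruct (moved_robot iM iM_lt E) as [[_ E2]|[c' [Hs' [E1 _]]]]; auto.
      rewrite (Huniq c' c Hs' Hs) in E1. exfalso. apply Hoff. congruence. }
    assert (HiS_dest : Q' iS <> Q iS -> Q' iS = mirror c D).
    { intro E. destruct (moved_robot iS HiS E) as [[E1 _]|[c' [Hs' [_ E2]]]].
      - exfalso. apply Hoff. congruence.
      - rewrite (Huniq c' c Hs' Hs) in E2. auto. }
    destruct (classic (Q' iM = Q iM)) as [UM|CM]; destruct (classic (Q' iS = Q iS)) as [US|CS].
    + exfalso. apply Hmoved1.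
      destruct (Nat.eq_dec i1 iM) as [->|N1]; auto. destruct (Nat.eq_dec i1 iS) as [->|N2]; auto.
    + left. apply (moved_single iS HiS CS).
      intros k Hk N. destruct (Nat.eq_dec k iM) as [->|N1]; auto.
    + left. apply (moved_single iM iM_lt CM).
      intros k Hk N. destruct (Nat.eq_dec k iS) as [->|N1]; auto.
    + right. exists c. split; [auto|split; [auto|]].
      apply (positions_replace2 n Q Q' iM iS M D c no_overlap_Q iM_lt HiS HiMS Q_iM EiS
        (HiM_dest CM) (HiS_dest CS) Hfix).
  - assert (Hfix : forall j, (j < n)%nat -> j <> iM -> Q' j = Q j).
    { intros j Hj N. apply unmoved_robot; auto.
      - intro E. apply N, Hinj; congruence.
      - intros c Hs E. apply N, Hinj; auto. rewrite E, Q_iM.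
        destruct (classic (M = mirror c M)) as [Ee|Ne]; [auto|exfalso; apply Hon; eauto]. }
    left. apply (moved_single iM iM_lt); auto.
    intro E. apply Hmoved1. destruct (Nat.eq_dec i1 iM) as [->|N]; auto.
Qed.

End MovedRobots.

Lemma moves_like_rank n a Q Q' m M D : (1 < n)%nat -> 3 < a -> no_overlap n Q -> no_overlap n Q' ->
  move_spec n a (positions n Q) m M D -> moves_like n (positions n Q) Q Q' M D ->
  (forall i, (i < n)%nat -> Q' i = Q i) \/
  exists m' g, (m' < m)%nat /\ has_rank n a (positions n (map_config g Q')) m'.
Proof.
  intros Hn Ha Hno Hno' HS HMv.
  pose proof (well_spaced_positions n Q ltac:(lia) Hno) as HC.
  destruct (classic (exists i, (i < n)%nat /\ Q' i <> Q i)) as [Hmoved|Hfixed].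
  2:{ left. intros i Hi. apply NNPP. intro E. apply Hfixed. eauto. }
  right.
  destruct (move_spec_mover_mem n a _ m M D HS) as [iM [HiM EM]]. symmetry in EM.
  pose proof (moves_like_target_ne n _ Q Q' M D HMv Hmoved) as HDM.
  destruct (rank_decreases n a _ m M D Hn Ha HC HS HDM) as [Hdec1 Hdec2].
  assert (HF : forall g, finite_le n (positions n (map_config g Q')))
    by (intro g; apply finite_le_positions, no_overlap_map_config; auto).
  destruct (moved_outcome n Q Q' M D iM Hno HMv HiM EM (proj2 HC) Hmoved)
    as [[g E]|[c [Hs [Hoff E]]]].
  - destruct (Hdec1 ltac:(rewrite <- E; apply HF)) as [m' [Hm' HR]].
    exists m', g. rewrite E. auto.
  - rewrite <- (iso_img_id (positions n Q')), iso_img_positions in E.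
    destruct (Hdec2 c Hs Hoff ltac:(rewrite <- E; apply HF)) as [m' [Hm' HR]].
    exists m', iso_id. rewrite E. auto.
Qed.


(** * Existence of planned moves, and the final configuration *)

Lemma has_rank_exists n a Q : (1 < n)%nat -> no_overlap n Q ->
  exists m, has_rank n a (positions n Q) m.
Proof.
  intros Hn Hno. set (S := positions n Q).
  destruct (positions_argmax n Q (fun _ => True) snd) as [T [HT [_ Htop]]].
  { exists (Q 0%nat). split; auto. exists 0%nat; split; auto; lia. }
  fold S in HT, Htop.
  assert (Htop' : forall q, S q -> snd q <= snd T) by (intros; apply Htop; auto).
  destruct (classic (exists B, S B /\ B <> T /\ snd B = snd T)) as [[B [HB [HBT HBy]]]|HnB].
  - destruct (classic (exists C, S C /\ C <> T /\ C <> B /\ snd C = snd T)) as [[C [HC [HCT [HCB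
    HCy]]]]|HnC].
    + exists (2 * n + 6)%nat. left. split; auto. exists T, B, C.
      repeat split; auto; try congruence.
    + assert (HA2 : top2 S T B).
      { split; auto. split; auto. split; [congruence|]. split; [auto|]. split; auto.
        intros q Hq Hqy. destruct (classic (q = T)); [left; auto|].
          destruct (classic (q = B)); [right; auto|].
        exfalso; apply HnC; exists q; auto. }
      destruct (Rlt_dec (Rabs (fst T - fst B)) (min_side a)).
      * exists (2 * n + 5)%nat. right; left. exists T, B. auto.
      * exists (2 * n + 3)%nat. right; right; right; left. exists T, B. split; auto. split; auto.
        lra.
  - exists (2 * n + 2)%nat. right; right; right; right; left. exists T. split; auto.
    split; auto. split; auto. intros q Hq Hqy. destruct (classic (q = T)); auto.
      exfalso; apply HnB; eauto.
Qed.

Lemma positions_far_above n Q pd y0 : exists W Y, y0 < Y /\ 0 <= W /\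
  forall q, positions n Q q -> Rabs (fst q - ngon_cx pd) <= W /\ snd q + crowd_gap pd W + 2 <= Y.
Proof.
  destruct (positions_bounded n Q (fun q => Rabs (fst q - ngon_cx pd))) as [B1 HB1].
  destruct (positions_bounded n Q snd) as [B2 HB2].
  set (W := Rmax 0 B1). exists W, (Rmax (y0 + 1) (B2 + crowd_gap pd W + 2)).
  pose proof (Rmax_l (y0 + 1) (B2 + crowd_gap pd W + 2)).
  pose proof (Rmax_r (y0 + 1) (B2 + crowd_gap pd W + 2)).
  split; [lra|split; [apply Rmax_l|]]. intros q Hq. split.
  - eapply Rle_trans; [apply HB1; auto|apply Rmax_r].
  - pose proof (HB2 q Hq). lra.
Qed.

Lemma free_corner_exists n Q pd M : (1 < n)%nat -> 0 < ngon_r pd -> no_overlap n Q ->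
  positions n Q M -> ~ slot n pd M -> exists k, (k < n)%nat /\ ~ positions n Q (corner n pd k).
Proof.
  intros Hn Hr Hno HM HnsM. apply NNPP. intro Hall.
  assert (Hin : forall k, (k < n)%nat -> positions n Q (corner n pd k)).
  { intros k Hk. apply NNPP. intro H. apply Hall. eauto. }
  set (L := M :: map (corner n pd) (seq 0 n)).
  assert (HL : NoDup L).
  { constructor.
    - intro H. apply in_map_iff in H. destruct H as [k [E _]]. apply HnsM. rewrite <- E.
      apply corner_slot.
    - apply map_NoDup_inj. intros k k' Hk Hk' E. apply (corner_inj n pd); auto. }
  pose proof (positions_count_le n Q L HL) as Hc.
  assert (length L <= n)%nat.
  { apply Hc. intros q [<-|Hq]; auto. apply in_map_iff in Hq. destruct Hq as [k [<- Hk]].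
    apply in_seq in Hk. apply Hin. lia. }
  unfold L in H. simpl in H. rewrite length_map, length_seq in H. lia.
Qed.

Lemma axis_corner_count n Q pd D0 M c : (1 < n)%nat -> 0 < ngon_r pd -> no_overlap n Q ->
  slot n pd D0 -> (forall v, slot n pd v -> ~ positions n Q v -> v = D0) ->
  positions n Q M -> ~ slot n pd M -> positions n Q (mirror c M) -> ~ slot n pd (mirror c M) ->
    M <> mirror c M -> False.
Proof.
  intros Hn Hr Hno HD0 Hfree HM HnsM HsM HnssM HneM.
  destruct (slot_corner n pd D0 Hn HD0) as [k0 [Hk0 E0]].
  set (f := fun k => if pt_eq_dec (corner n pd k) D0 then M else corner n pd k).
  set (L := mirror c M :: map f (seq 0 n)).
  assert (Hf : forall k, (k < n)%nat -> f k = M \/ (f k = corner n pd k /\ corner n pd k <> D0)).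
  { intros k Hk. unfold f. destruct (pt_eq_dec (corner n pd k) D0); [left|right]; auto. }
  assert (HL : NoDup L).
  { constructor.
    - intro H. apply in_map_iff in H. destruct H as [k [E Hk]]. apply in_seq in Hk.
      destruct (Hf k ltac:(lia)) as [E'|[E' _]]; rewrite E' in E.
      + apply HneM; auto.
      + apply HnssM. rewrite <- E. apply corner_slot.
    - apply map_NoDup_inj. intros k k' Hk Hk' E.
      unfold f in E.
        destruct (pt_eq_dec (corner n pd k) D0) as [E1|N1];
        destruct (pt_eq_dec (corner n pd k') D0) as [E2|N2].
      + apply (corner_inj n pd); auto. congruence.
      + exfalso. apply HnsM. rewrite E. apply corner_slot.
      + exfalso. apply HnsM. rewrite <- E. apply corner_slot.
      + apply (corner_inj n pd); auto. }
  assert (length L <= n)%nat.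
  { apply (positions_count_le n Q L HL). intros q [<-|Hq]; auto. apply in_map_iff in Hq.
    destruct Hq as [k [<- Hk]].
    apply in_seq in Hk. destruct (Hf k ltac:(lia)) as [E|[E Hne]]; rewrite E; auto.
    apply NNPP. intro H. apply Hne. apply Hfree; auto. apply corner_slot. }
  unfold L in H. simpl in H. rewrite length_map, length_seq in H. lia.
Qed.

Lemma highest_free_slot n Q pd M : (1 < n)%nat -> 0 < ngon_r pd -> no_overlap n Q ->
  positions n Q M -> ~ slot n pd M ->
  exists D, slot n pd D /\ ~ positions n Q D /\
    forall v, slot n pd v -> ~ positions n Q v -> snd v <= snd D.
Proof.
  intros Hn Hr Hno HM HnM.
  destruct (free_corner_exists n Q pd M Hn Hr Hno HM HnM) as [k1 [Hk1 Hfk1]].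
  destruct (positions_argmax n (corner n pd) (fun v => ~ positions n Q v) snd)
    as [D [HD [HnD Hmax]]].
  { exists (corner n pd k1). split; auto. exists k1; auto. }
  exists D. split; [destruct HD as [k [_ ->]]; apply corner_slot|split; auto].
  intros v Hv Hnv. destruct (slot_corner n pd v Hn Hv) as [k [Hk ->]]. apply Hmax; auto.
  exists k; auto.
Qed.

Lemma fill_target_exists n a Q pd y W M : (1 < n)%nat -> 3 < a -> no_overlap n Q ->
  good_ngon n a (positions n Q) pd y W -> crowd n (positions n Q) pd M ->
  exists D, slot n pd D /\ ~ positions n Q D /\
    (forall v, slot n pd v -> ~ positions n Q v -> snd v <= snd D) /\
    (forall c, mirror_symmetric (positions n Q) c -> M <> mirror c M ->
      0 < (fst D - c) * (fst M - c)).
Proof.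
  intros Hn Ha Hno HG HM. set (S := positions n Q) in *.
  pose proof (good_ngon_facts n a S pd y W Hn Ha HG) as Hfacts.
  pose proof (ngon_r_pos Hfacts) as Hr.
  pose proof (well_spaced_positions n Q ltac:(lia) Hno) as HC. fold S in HC.
  destruct (highest_free_slot n Q pd M Hn Hr Hno (proj1 HM) (proj2 HM)) as [D0 [HsD0 [HnD0 Hmax]]].
  destruct (classic (exists c, mirror_symmetric S c /\ M <> mirror c M)) as [[c [Hs HnM]]|Hno2].
  2:{ exists D0. split; [|split; [|split]]; auto. intros c Hs HnM. exfalso; apply Hno2; eauto. }
  pose proof (mirror_axis_center Hfacts Hs) as Ec.
  pose proof (mirror_ne_x c M HnM) as HxM.
  assert (Huc : forall c', mirror_symmetric S c' -> c' = c) by (intros; apply (proj2 HC); auto).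
  destruct (Rtotal_order ((fst D0 - c) * (fst M - c)) 0) as [Hlt|[Heq|Hgt]].
  - exists (mirror c D0). split; [rewrite Ec; apply slot_mirror; auto|].
    split; [intro H; apply HnD0; rewrite <- (mirror_involutive c D0); apply Hs; auto|].
    split; [intros v Hv Hnv; apply Hmax; auto|].
    intros c' Hs' HnM'. rewrite (Huc c' Hs'). unfold mirror; simpl. nra.
  - (* A free slot on the axis is the bottom corner, and then the only free slot: the n - 1
       occupied slots, M and its mirror image make n + 1 robots. *)
    exfalso. assert (HxD : fst D0 = c) by (destruct (Rmult_integral _ _ Heq); lra).
    assert (HD0b : D0 = ngon_pt n pd (Z.of_nat n))
      by (apply (free_axis_slot_bottom Hfacts); auto; rewrite HxD; auto).
    apply (axis_corner_count n Q pd D0 M c Hn Hr Hno HsD0).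
    + intros v Hv Hnv. pose proof (Hmax v Hv Hnv) as Hle. rewrite HD0b in Hle |- *.
      rewrite ngon_pt_n_height in Hle by auto. apply slot_bottom; auto.
    + apply HM.
    + apply HM.
    + apply Hs, HM.
    + intro H. apply (proj2 HM). rewrite <- (mirror_involutive c M), Ec. apply slot_mirror.
      rewrite <- Ec; auto.
    + auto.
  - exists D0. split; [|split; [|split]]; auto.
    intros c' Hs' HnM'. rewrite (Huc c' Hs'). lra.
Qed.

Lemma move_spec_crowd_exists n a Q pd y W l : (1 < n)%nat -> 3 < a -> no_overlap n Q ->
  good_ngon n a (positions n Q) pd y W -> crowd_list n (positions n Q) pd l ->
  crowd_separated n (positions n Q) pd ->
    exists M D, move_spec n a (positions n Q) (2 * length l) M D.
Proof.
  intros Hn Ha Hno HG HL HSep.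
  destruct l as [|q l'].
  - exists (Q 0%nat), (Q 0%nat). do 5 right. exists pd, y, W, nil. split; [auto|split; [auto|]].
    do 2 right. split; [reflexivity|split; [auto|split; [exists 0%nat; split; auto; lia|auto]]].
  - assert (Hq : crowd n (positions n Q) pd q) by (apply (proj2 HL); left; auto).
    destruct HSep as [Hnone|[M Hlead]]; [exfalso; apply (Hnone q); auto|].
    destruct (fill_target_exists n a Q pd y W M Hn Ha Hno HG (proj1 Hlead))
      as [D [HD [HnD [Hmaxv Hside]]]].
    exists M, D. do 5 right. exists pd, y, W, (q :: l'). split; [auto|split; [auto|]].
    right; left. split; [auto|split; [discriminate|auto 10]].
Qed.

Lemma move_spec_crowd_lift_exists n a Q pd y W l : good_ngon n a (positions n Q) pd y W ->
  crowd_list n (positions n Q) pd l -> ~ crowd_separated n (positions n Q) pd ->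
  exists M D, move_spec n a (positions n Q) (2 * length l + 1) M D.
Proof.
  intros HG HL HnS. set (S := positions n Q) in *.
  destruct (classic (exists q, crowd n S pd q)) as [[q' Hq']|Hnc].
  2:{ exfalso. apply HnS. left. intros q Hq. apply Hnc; eauto. }
  destruct (positions_argmax n Q (crowd n S pd) snd) as [M [_ [HM Hmax]]].
  { exists q'. split; [apply Hq'|auto]. }
  destruct (classic (exists q, crowd n S pd q /\ q <> M)) as [[q1 [Hq1 Hq1M]]|Hnc2].
  2:{ exfalso. apply HnS. right. exists M. split; [auto|split].
      - intros q Hq. apply Hmax; auto. apply Hq.
      - intros q Hq _. left. apply NNPP. intro H. apply Hnc2. eauto. }
  destruct (positions_argmax n Q (fun q => crowd n S pd q /\ q <> M) snd)
    as [q0 [_ [[Hq0 Hq0M] Hq0m]]].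
  { exists q1. split; [apply Hq1|auto]. }
  exists M, (fst M, snd q0 + 2). do 5 right. exists pd, y, W, l. split; [auto|split; [auto|]].
  left. split; [auto|split; [auto|split; [auto|split]]].
  - intros q Hq. apply Hmax; auto. apply Hq.
  - exists q0. split; [auto|split; [auto|split; [|auto]]].
    intros q Hq HqM. apply Hq0m; auto. apply Hq.
Qed.

Lemma move_spec_exists n a Q m : (1 < n)%nat -> 3 < a -> no_overlap n Q ->
  has_rank n a (positions n Q) m -> (forall m', has_rank n a (positions n Q) m' -> (m <= m')%nat) ->
  exists M D, move_spec n a (positions n Q) m M D.
Proof.
  intros Hn Ha Hno HR Hmin.
  destruct HR as [C|[C|[C|[C|[C|C]]]]].
  - destruct C as [HN3 Hm]. pose proof HN3 as [q1 [q2 [q3 [H1 [_ [_ [_ [_ [_ [_ [_ Htop]]]]]]]]]]].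
    exists q1, (fst q1, snd q1 + 2). left. auto.
  - destruct C as [A [B [HA2 [Hd Hm]]]]. exists A, (fst A, snd A + 2). right; left. exists A, B.
    auto.
  - destruct C as [A [B [HA2 [Hd [Hel Hm]]]]].
    exists A, (fst A + min_side a * sgn (fst A - fst B), snd A). do 2 right; left. exists A, B.
      auto 10.
  - destruct C as [A [B [HA2 [Hd Hm]]]].
    destruct (positions_far_above n Q (ngon_of_top2 n A B) (snd A)) as [W [Y [HY [HW HQ]]]].
    exists A, (fst A, Y). do 3 right; left. exists A, B, W, Y.
    repeat (split; [solve [auto]|]). intros q Hq _ _. apply HQ; auto.
  - destruct C as [T [HA1 Hm]].
    destruct (positions_far_above n Q (ngon_of_top1 n a T) (snd T)) as [W [Y [HY [HW HQ]]]].
    exists T, (fst T, Y). do 4 right; left. exists T, W, Y.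
    repeat (split; [solve [auto]|]). intros q Hq _. apply HQ; auto.
  - destruct C as [pd [y [W [l [b [HG [HL [Hb [Hb0 ->]]]]]]]]].
    destruct Hb as [->| ->].
    + rewrite Nat.add_0_r. apply (move_spec_crowd_exists n a Q pd y W); auto.
    + apply (move_spec_crowd_lift_exists n a Q pd y W); auto. intro HSep.
      pose proof (Hmin _ (has_rank_crowd_separated n a _ pd y W l HG HL HSep)). lia.
Qed.

Lemma move_spec_progress n a Q m M D : (1 < n)%nat -> 3 < a ->
  move_spec n a (positions n Q) m M D ->
  (exists i, (i < n)%nat /\ Q i = M) /\ ((0 < m)%nat -> D <> M).
Proof.
  intros Hn Ha HS. split.
  { destruct (move_spec_mover_mem n a _ m M D HS) as [i [Hi E]]. exists i; auto. }
  intros Hm E. pose proof (min_side_gt6 a Ha).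
  destruct HS as [C|[C|[C|[C|[C|C]]]]].
  - destruct C as [_ [_ [_ [_ ->]]]]. destruct M; injection E; lra.
  - destruct C as [A [B [_ [_ [_ [-> ->]]]]]]. destruct A; injection E; lra.
  - destruct C as [A [B [_ [_ [_ [_ [-> ->]]]]]]].
    pose proof (f_equal fst E) as E1. simpl in E1.
    unfold sgn in E1. destruct (Rle_dec 0 (fst A - fst B)); lra.
  - destruct C as [A [B [W [Y [_ [_ [_ [-> [-> [HY _]]]]]]]]]].
    destruct A; injection E; simpl in *; lra.
  - destruct C as [T [W [Y [_ [_ [-> [-> [HY _]]]]]]]]. destruct T; injection E; simpl in *; lra.
  - destruct C as [pd [y [W [l [HG [HL [C|[C|C]]]]]]]].
    + destruct C as [_ [HnS [HM [Hmax [q0 [Hq0 [Hq0M [Hq0m ->]]]]]]]].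
      pose proof (not_separated_gap n _ pd M q0 HnS HM Hmax Hq0m).
      destruct M; injection E; simpl in *; lra.
    + destruct C as [_ [_ [[[HM _] _] [_ [HnD _]]]]]. subst. contradiction.
    + destruct C as [-> _]. lia.
Qed.

Definition ngon_map (h : iso) (pd : ngon) : ngon :=
  mkNgon (flip_sign (flip h) * ngon_cx pd + shift_x h) (ngon_cy pd + shift_y h) (ngon_r pd)
    (ngon_parity pd).

Lemma slot_iso_app n h pd q : slot n pd q -> slot n (ngon_map h pd) (iso_app h q).
Proof.
  intros [K [[j Hj] E]]. subst q.
  destruct h as [[] t u]; unfold iso_app, ngon_map, ngon_pt; simpl.
  - exists (- K)%Z.
    split; [exists (- j - ngon_parity pd)%Z; unfold ngon_map; cbn [ngon_parity]; lia|].
    unfold ngon_pt; simpl. unfold ang. rewrite opp_IZR.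
    replace (- IZR K * PI / INR n) with (- (IZR K * PI / INR n)) by (unfold Rdiv; ring).
    rewrite sin_neg, cos_neg. apply pt_eq; simpl; ring.
  - exists K. split; [exists j; unfold ngon_map; cbn [ngon_parity]; lia|]. unfold ngon_pt; simpl.
    apply pt_eq; simpl; ring.
Qed.

Lemma rank0_uniform_circle n a Q g : (1 < n)%nat -> 3 < a -> no_overlap n Q ->
  has_rank n a (positions n (map_config g Q)) 0%nat -> uniform_circle n a Q.
Proof.
  intros Hn Ha Hno HR.
  destruct HR as [[_ E]|[[A [B [_ [_ E]]]]|[[A [B [_ [_ [_ E]]]]]|[[A [B [_ [_ E]]]]|[[T [_
    E]]|C]]]]];
    try lia.
  destruct C as [pd [y [W [l [b [HG [[Hlnd Hlin] [_ [_ E]]]]]]]]].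
  assert (Hl : l = nil) by (destruct l; simpl in E; [auto|lia]). subst l.
  pose proof (good_ngon_facts n a _ pd y W Hn Ha HG) as Hfacts.
  pose proof (ngon_r_pos Hfacts) as Hr. pose proof (ngon_side_ge Hfacts) as Hside.
  assert (Hall : forall i, (i < n)%nat -> slot n (ngon_map (iso_inv g) pd) (Q i)).
  { intros i Hi. rewrite <- (iso_app_invK g (Q i)). apply slot_iso_app.
    destruct (classic (slot n pd (iso_app g (Q i)))) as [H|H]; auto. exfalso.
    apply (proj2 (Hlin (iso_app g (Q i)))). split; auto. exists i; split; auto. }
  set (pd' := ngon_map (iso_inv g) pd).
  assert (Hex : forall i, (i < n)%nat -> exists k, (k < n)%nat /\ Q i = corner n pd' k).
  { intros i Hi. apply slot_corner; auto. }
  set (s := fun i => epsilon (inhabits 0%nat) (fun k => (k < n)%nat /\ Q i = corner n pd' k)).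
  assert (Hs : forall i, (i < n)%nat -> (s i < n)%nat /\ Q i = corner n pd' (s i)).
  { intros i Hi.
    apply (epsilon_spec (inhabits 0%nat) (fun k => (k < n)%nat /\ Q i = corner n pd' k)). auto. }
  exists (ngon_cx pd', ngon_cy pd'), (ngon_r pd'), (PI / 2 - IZR (ngon_parity pd') * PI / INR n), s.
  split; [unfold pd', ngon_map; simpl; auto|].
  split; [intros i Hi; apply Hs; auto|].
  split.
  { intros i j Hi Hj E'. apply (no_overlap_inj n Q); auto.
    rewrite (proj2 (Hs i Hi)), (proj2 (Hs j Hj)), E'. auto. }
  split.
  { intros i Hi. rewrite <- corner_vertex by auto. apply Hs; auto. }
  rewrite <- !corner_vertex by auto.
    rewrite side_corner by (auto; unfold pd', ngon_map; simpl; lra).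
  unfold pd', ngon_map; simpl. unfold min_side in Hside. lra.
Qed.

Theorem mainTheorem1 :
  forall (n : nat) (a : R), (1 < n)%nat -> 3 < a ->
  exists A : algorithm,
    forall (F : nat -> frame) (P0 : config) (act : nat -> nat -> bool),
      no_overlap n P0 ->
      valid_schedule n act ->
      (exists k, uniform_circle n a (exec n A F act P0 k)) /\
      (forall k, collision_free_move n (exec n A F act P0 k)
                                       (exec n A F act P0 (S k))).
Proof.
  intros n a Hn Ha. exists (algo (has_rank n a) (move_spec n a)).
  apply (ranked_algorithm_correct _ _ n a ltac:(lia)).
  - intros Q Hno. apply has_rank_exists; auto.
  - intros Q m Hno HR Hmin. apply move_spec_exists; auto.
  - intros Q m M D Hno HS. apply (move_spec_progress n a Q m M D); auto.
  - intros Q Q' m M D Hno HS HMv.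
    pose proof (moves_like_collision_free n a Q Q' m M D Hn Ha Hno HS HMv) as Hcf.
    split; auto. apply (moves_like_rank n a Q Q' m M D Hn Ha Hno); auto.
    apply (collision_free_move_end n Q); auto.
  - intros Q g Hno HR. apply (rank0_uniform_circle n a Q g); auto.
Qed.
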